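(* For all $z\in\mathbb S^1$, $\mathrm n_-(b_z)\le2\dim(M)-\mathrm n_0(\gamma)$; if moreover $z$ is not an eigenvalue of $\mathfrak P$, then $\mathrm n_-(b_z)\le\dim(M)-\mathrm n_0(\gamma)$. Consequently, for every integer $N\ge1$, with $\omega=e^{2\pi i/N}$, $$0\le\sum_{k=0}^{N-1}\mathrm n_-(b_{\omega^k})\le N\big[\dim(M)-\mathrm n_0(\gamma)\big]+4\dim(M)^2-2\,\mathrm n_0(\gamma)\dim(M).$$
   Context: Let $(M,g)$ be a semi-Riemannian manifold of dimension $n$ and $\gamma:[0,1]\to M$ an orientation preserving closed geodesic, extended $1$-periodically. Fix a smooth $1$-periodic family of isomorphisms $T_t:\mathbb R^n\to T_{\gamma(t)}M$ with $g(T_te_i,T_te_j)=\epsilon_i\delta_{ij}$, $\epsilon_i\in\{\pm1\}$. Put $G(u,v)=\sum_j\epsilon_ju_j\bar v_j$ on $\mathbb C^n$. Let $\overline R_t=T_t^{-1}\circ R(\dot\gamma(t),T_t\,\cdot\,)\dot\gamma(t)$ (curvature $R(X,Y)=[\nabla_X,\nabla_Y]-\nabla_{[X,Y]}$) and $\Gamma_t$ defined by $T_t^{-1}\tfrac{D}{dt}\big(T_t\overline V(t)\big)=\overline V'(t)+\Gamma_t\overline V(t)$, extended $\mathbb C$-linearly. The Jacobi equation (J) is $V''+2\Gamma_rV'+(\Gamma_r'+\Gamma_r^2-\overline R_r)V=0$. The linearized Poincaré map $\mathfrak P:\mathbb C^{2n}\to\mathbb C^{2n}$ is $\mathfrak P(v,v')=\big(V(1),V'(1)+\Gamma_0V(1)\big)$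 where $V$ solves (J) with $V(0)=v$, $V'(0)=v'-\Gamma_0v$. $\mathrm n_0(\gamma)$ is the dimension of the space of solutions of (J) with $V(0)=V(1)=0$. $\mathbb J^{(2)}_\gamma(z)=\{V\ \text{solution of (J)}:V(1)=zV(0)\}$ and $b_z$ is the Hermitian form on $\mathbb J^{(2)}_\gamma(z)$ given by $b_z(V,W)=G\big(\bar zV'(1)-V'(0),W(0)\big)$. $\mathrm n_-(b)$ is the index (maximal dimension of a negative definite subspace) of a Hermitian form $b$. *)

From Stdlib Require Import Reals ZArith.
Open Scope R_scope.

Definition Cx := (R * R)%type.
Definition C0 : Cx := (0, 0).
Definition RtoC (r : R) : Cx := (r, 0).
Definition Cadd (a b : Cx) : Cx := (fst a + fst b, snd a + snd b).
Definition Csub (a b : Cx) : Cx := (fst a - fst b, snd a - snd b).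
Definition Cmul (a b : Cx) : Cx :=
  (fst a * fst b - snd a * snd b, fst a * snd b + snd a * fst b).
Definition Cconj (a : Cx) : Cx := (fst a, - snd a).
Definition Cnorm2 (a : Cx) : R := fst a * fst a + snd a * snd a.
Fixpoint Cpow (a : Cx) (k : nat) : Cx :=
  match k with O => (1, 0) | S k' => Cmul a (Cpow a k') end.
Fixpoint Csum (n : nat) (f : nat -> Cx) : Cx :=
  match n with O => C0 | S m => Cadd (Csum m f) (f m) end.
Fixpoint Rsum (n : nat) (f : nat -> R) : R :=
  match n with O => 0 | S m => Rsum m f + f m end.
Fixpoint Nsum (n : nat) (f : nat -> nat) : nat :=
  match n with O => 0%nat | S m => (Nsum m f + f m)%nat end.

Definition Cexpi (th : R) : Cx := (cos th, sin th).
Definition omega (N : nat) : Cx := Cexpi (2 * PI / INR N).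

(* vectors are nat -> Cx; only indices < n are meaningful *)
Definition cvec := nat -> Cx.
Definition rmat := nat -> nat -> R.
Definition in_dim (n : nat) (v : cvec) : Prop := forall i, (n <= i)%nat -> v i = C0.
Definition matact (n : nat) (A : rmat) (v : cvec) : cvec :=
  fun i => Csum n (fun j => Cmul (RtoC (A i j)) (v j)).
Definition matmul (n : nat) (A B : rmat) : rmat :=
  fun i j => Rsum n (fun k => A i k * B k j).
Definition Gform (n : nat) (eps : nat -> R) (u v : cvec) : Cx :=
  Csum n (fun j => Cmul (RtoC (eps j)) (Cmul (u j) (Cconj (v j)))).

Definition Cinf (f : R -> R) : Prop :=
  exists d : nat -> R -> R,
    d O = f /\ forall k t, derivable_pt_lim (d k) t (d (S k) t).

Definition cderiv (n : nat) (V W : R -> cvec) : Prop :=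
  forall i t, (i < n)%nat ->
    derivable_pt_lim (fun s => fst (V s i)) t (fst (W t i)) /\
    derivable_pt_lim (fun s => snd (V s i)) t (snd (W t i)).

(* ---------- the Jacobi equation (J) ----------
   V'' + 2 Gamma V' + (Gamma' + Gamma^2 - Rbar) V = 0 ,
   dGam is the derivative Gamma' of Gam. *)
Definition jacobi (n : nat) (Gam dGam Rb : R -> rmat) (V : R -> cvec) : Prop :=
  (forall t, in_dim n (V t)) /\
  exists V1 V2 : R -> cvec,
    cderiv n V V1 /\ cderiv n V1 V2 /\
    forall t i, (i < n)%nat ->
      Cadd (Cadd (V2 t i) (Cmul (RtoC 2) (matact n (Gam t) (V1 t) i)))
           (matact n (fun a b => dGam t a b + matmul n (Gam t) (Gam t) a b - Rb t a b)
                   (V t) i) = C0.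

Definition lincomb (k : nat) (c : nat -> Cx) (Vs : nat -> R -> cvec) : R -> cvec :=
  fun t i => Csum k (fun j => Cmul (c j) (Vs j t i)).

Definition lin_indep (k : nat) (Vs : nat -> R -> cvec) : Prop :=
  forall c : nat -> Cx, (forall t i, lincomb k c Vs t i = C0) ->
    forall j, (j < k)%nat -> c j = C0.

Definition dim_is (S : (R -> cvec) -> Prop) (d : nat) : Prop :=
  (exists Vs, (forall j, (j < d)%nat -> S (Vs j)) /\ lin_indep d Vs) /\
  (forall k Vs, (forall j, (j < k)%nat -> S (Vs j)) -> lin_indep k Vs -> (k <= d)%nat).

(* solutions of (J) with V(0) = V(1) = 0 ; n_0(gamma) is its dimension *)
Definition J0 (n : nat) (Gam dGam Rb : R -> rmat) (V : R -> cvec) : Prop :=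
  jacobi n Gam dGam Rb V /\ (forall i, V 0 i = C0) /\ (forall i, V 1 i = C0).

Definition Jz (n : nat) (Gam dGam Rb : R -> rmat) (z : Cx) (V : R -> cvec) : Prop :=
  jacobi n Gam dGam Rb V /\ forall i, V 1 i = Cmul z (V 0 i).

(* b_z(V,V) < 0, with b_z(V,W) = G( conj(z) V'(1) - V'(0), W(0) ) *)
Definition bz_neg (n : nat) (eps : nat -> R) (z : Cx) (V : R -> cvec) : Prop :=
  exists V1, cderiv n V V1 /\
    fst (Gform n eps (fun i => Csub (Cmul (Cconj z) (V1 1 i)) (V1 0 i)) (V 0)) < 0 /\
    snd (Gform n eps (fun i => Csub (Cmul (Cconj z) (V1 1 i)) (V1 0 i)) (V 0)) = 0.

Definition neg_space (n : nat) (eps : nat -> R) (Gam dGam Rb : R -> rmat) (z : Cx)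
    (k : nat) (Vs : nat -> R -> cvec) : Prop :=
  (forall j, (j < k)%nat -> Jz n Gam dGam Rb z (Vs j)) /\
  (forall c : nat -> Cx, (exists j, (j < k)%nat /\ c j <> C0) ->
     bz_neg n eps z (lincomb k c Vs)).

Definition index_bz (n : nat) (eps : nat -> R) (Gam dGam Rb : R -> rmat) (z : Cx)
    (m : nat) : Prop :=
  (exists Vs, neg_space n eps Gam dGam Rb z m Vs) /\
  (forall k Vs, neg_space n eps Gam dGam Rb z k Vs -> (k <= m)%nat).

Definition poincare (n : nat) (Gam dGam Rb : R -> rmat) (v v' w w' : cvec) : Prop :=
  exists V V1 : R -> cvec,
    jacobi n Gam dGam Rb V /\ cderiv n V V1 /\
    forall i, (i < n)%nat ->
      V 0 i = v i /\
      V1 0 i = Csub (v' i) (matact n (Gam 0) v i) /\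
      w i = V 1 i /\
      w' i = Cadd (V1 1 i) (matact n (Gam 0) (V 1) i).

Definition poincare_eig (n : nat) (Gam dGam Rb : R -> rmat) (z : Cx) : Prop :=
  exists v v' : cvec, in_dim n v /\ in_dim n v' /\
    (exists i, (i < n)%nat /\ (v i <> C0 \/ v' i <> C0)) /\
    exists w w', poincare n Gam dGam Rb v v' w w' /\
      forall i, (i < n)%nat -> w i = Cmul z (v i) /\ w' i = Cmul z (v' i).

(* The proof combines three general facts.
   - Linear algebra: at most d vectors of C^d are linearly independent
     (Gaussian elimination), and eigenvectors of a linear relation that only
     relates 0 to 0 are independent when their eigenvalues are distinct.
   - Uniqueness for (J): a solution with V(0) = V'(0) = 0 vanishes
     identically (Gronwall's inequality for |V|^2 + |V'|^2).
   - Conservation: for two solutions V, W of (J) the form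
     G(V' + Gamma V, W) - G(V, W' + Gamma W) is constant in t, because
     Gamma is G-skew and Rbar is G-symmetric.
   The first bound n_-(b_z) <= n <= 2n - n_0 holds because V |-> V(0) is
   injective on a b_z-negative space and V |-> V'(0) is injective on the
   space of solutions vanishing at 0 and 1.  When z is not an eigenvalue of
   the Poincare map, the vectors conj(z) U'(1) - U'(0) for U in a basis of
   that space are independent and, by conservation, G-orthogonal to the
   initial values of J(z); together with eps W(0) for W in a negative space
   they give n_0 + n_-(b_z) independent vectors of C^n.  Finally the N-th
   roots of unity are pairwise distinct, so at most 2n of them are
   eigenvalues of the Poincare map, which yields the bound on the sum. *)

From Stdlib Require Import Reals ZArith Arith Lra Lia Classical ClassicalEpsilon
  FunctionalExtensionality.
Open Scope R_scope.

Lemma Ceq (a b : Cx) : fst a = fst b -> snd a = snd b -> a = b.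
Proof. destruct a, b; simpl; intros; subst; auto. Qed.

Ltac cring := repeat match goal with x : Cx |- _ => destruct x end;
  unfold Cadd, Csub, Cmul, Cconj, RtoC, C0 in *; simpl in *; apply Ceq; simpl; ring.

Ltac cs := cbn [fst snd Cadd Csub Cmul RtoC C0 Cconj] in *.
Ltac split_eq H := let H1 := fresh H in let H2 := fresh H in
  pose proof (f_equal fst H) as H1; pose proof (f_equal snd H) as H2; clear H; cs.

Lemma Cadd_0l a : Cadd C0 a = a. Proof. cring. Qed.
Lemma Cmul_0r a : Cmul a C0 = C0. Proof. cring. Qed.
Lemma Cmul_comm a b : Cmul a b = Cmul b a. Proof. cring. Qed.
Lemma Cmul_assoc a b c : Cmul (Cmul a b) c = Cmul a (Cmul b c). Proof. cring. Qed.

Lemma Cadd_eq0 x y : Cadd x y = C0 -> x = Csub C0 y.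
Proof. intro E. split_eq E. apply Ceq; cs; lra. Qed.
Lemma Csub_eq0 x y : Csub x y = C0 -> x = y.
Proof. intro E. split_eq E. apply Ceq; cs; lra. Qed.

Definition Cinv (a : Cx) : Cx := (fst a / Cnorm2 a, - snd a / Cnorm2 a).

Lemma Cnorm2_pos a : a <> C0 -> 0 < Cnorm2 a.
Proof.
  destruct a as [x y]; unfold Cnorm2, C0; simpl; intro H.
  destruct (Req_dec x 0), (Req_dec y 0); subst; try (exfalso; auto; fail); nra.
Qed.

Lemma Cmul_inv a : a <> C0 -> Cmul a (Cinv a) = (1, 0).
Proof.
  intro H; pose proof (Cnorm2_pos a H).
  destruct a as [x y]; unfold Cinv, Cmul, Cnorm2 in *; simpl in *.
  f_equal; field; lra.
Qed.

Lemma Cmul_eq0 a b : Cmul a b = C0 -> a = C0 \/ b = C0.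
Proof.
  intro H. destruct (classic (a = C0)) as [|Ha]; auto. right.
  assert (E : Cmul (Cinv a) (Cmul a b) = b).
  { rewrite <- Cmul_assoc, (Cmul_comm (Cinv a)), Cmul_inv by auto. cring. }
  rewrite <- E, H. apply Cmul_0r.
Qed.

Lemma Cone_neq0 : ((1,0) : Cx) <> C0.
Proof. unfold C0; intro H; inversion H; lra. Qed.

Lemma Cmul_conj_unit z : Cnorm2 z = 1 -> Cmul z (Cconj z) = (1, 0).
Proof. destruct z as [a b]; unfold Cnorm2, Cmul, Cconj; simpl; intro H. apply Ceq; simpl; lra. Qed.

Lemma Csum_ext k f g : (forall j, (j < k)%nat -> f j = g j) -> Csum k f = Csum k g.
Proof. induction k; simpl; intros; auto. rewrite IHk by (intros; apply H; lia). rewrite H by lia; auto. Qed.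
Lemma Rsum_ext k f g : (forall j, (j < k)%nat -> f j = g j) -> Rsum k f = Rsum k g.
Proof. induction k; simpl; intros; auto. rewrite IHk by (intros; apply H; lia). rewrite H by lia; auto. Qed.
Lemma Csum_zero k f : (forall j, (j < k)%nat -> f j = C0) -> Csum k f = C0.
Proof. induction k; simpl; intros; auto. rewrite IHk, H by (try intros; try apply H; lia). cring. Qed.
Lemma Csum_add k f g : Csum k (fun j => Cadd (f j) (g j)) = Cadd (Csum k f) (Csum k g).
Proof. induction k; simpl. cring. rewrite IHk. cring. Qed.
Lemma Csum_sub k f g : Csum k (fun j => Csub (f j) (g j)) = Csub (Csum k f) (Csum k g).
Proof. induction k; simpl. cring. rewrite IHk. cring. Qed.
Lemma Csum_scal k a f : Csum k (fun j => Cmul a (f j)) = Cmul a (Csum k f).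
Proof. induction k; simpl. cring. rewrite IHk. cring. Qed.
Lemma Csum_scal_r k a f : Csum k (fun j => Cmul (f j) a) = Cmul (Csum k f) a.
Proof. induction k; simpl. cring. rewrite IHk. cring. Qed.
Lemma Csum_conj k f : Cconj (Csum k f) = Csum k (fun j => Cconj (f j)).
Proof. induction k; simpl. cring. rewrite <- IHk. cring. Qed.
Lemma Csum_swap k l (f : nat -> nat -> Cx) :
  Csum k (fun i => Csum l (fun j => f i j)) = Csum l (fun j => Csum k (fun i => f i j)).
Proof. induction k; simpl. symmetry; apply Csum_zero; auto. rewrite IHk, <- Csum_add. auto. Qed.
Lemma Csum_split a b f : Csum (a + b) f = Cadd (Csum a f) (Csum b (fun j => f (a + j)%nat)).
Proof.
  induction b; simpl. rewrite Nat.add_0_r; cring.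
  rewrite Nat.add_succ_r; simpl. rewrite IHb. cring.
Qed.
Lemma fst_Csum k f : fst (Csum k f) = Rsum k (fun j => fst (f j)).
Proof. induction k; simpl; auto. rewrite IHk; auto. Qed.
Lemma snd_Csum k f : snd (Csum k f) = Rsum k (fun j => snd (f j)).
Proof. induction k; simpl; auto. rewrite IHk; auto. Qed.
Lemma RtoC_Rsum k f : RtoC (Rsum k f) = Csum k (fun j => RtoC (f j)).
Proof. induction k; simpl. auto. rewrite <- IHk. cring. Qed.

Lemma Rsum_add k f g : Rsum k (fun j => f j + g j) = Rsum k f + Rsum k g.
Proof. induction k; simpl. ring. rewrite IHk. ring. Qed.
Lemma Rsum_scal k a f : Rsum k (fun j => a * f j) = a * Rsum k f.
Proof. induction k; simpl. ring. rewrite IHk. ring. Qed.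
Lemma Rsum_opp k f : Rsum k (fun j => - f j) = - Rsum k f.
Proof. induction k; simpl. ring. rewrite IHk; ring. Qed.
Lemma Rsum_const k c : Rsum k (fun _ => c) = INR k * c.
Proof. induction k; simpl Rsum. simpl; ring. rewrite IHk, S_INR; ring. Qed.
Lemma Rsum_le k f g : (forall j, (j<k)%nat -> f j <= g j) -> Rsum k f <= Rsum k g.
Proof.
  induction k; simpl; intros. lra.
  pose proof (H k ltac:(lia)). pose proof (IHk ltac:(intros; apply H; lia)). lra.
Qed.
Lemma Rsum_nonneg k f : (forall j, (j<k)%nat -> 0 <= f j) -> 0 <= Rsum k f.
Proof. intros. rewrite <- (Rmult_0_r (INR k)), <- Rsum_const. apply Rsum_le; auto. Qed.
Lemma Rsum_term k f j0 : (forall j, (j<k)%nat -> 0 <= f j) -> (j0 < k)%nat -> f j0 <= Rsum k f.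
Proof.
  induction k; intros H Hj; simpl. lia.
  assert (0 <= Rsum k f) by (apply Rsum_nonneg; intros; apply H; lia).
  destruct (Nat.eq_dec j0 k). subst; lra.
  assert (f j0 <= Rsum k f) by (apply IHk; [intros; apply H|]; lia).
  pose proof (H k ltac:(lia)); lra.
Qed.
Lemma Rsum_zero_nonneg k f : (forall j, (j<k)%nat -> 0 <= f j) -> Rsum k f = 0 ->
  forall j, (j<k)%nat -> f j = 0.
Proof.
  intros Hp Hs j Hj. pose proof (Rsum_term k f j Hp Hj). pose proof (Hp j Hj). lra.
Qed.

Lemma Rsum_sq k y : Rsum k y * Rsum k y <= 2 ^ k * Rsum k (fun j => y j * y j).
Proof.
  induction k; simpl. lra.
  assert (0 <= Rsum k (fun j => y j * y j)) by (apply Rsum_nonneg; intros; nra).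
  assert (1 <= 2 ^ k) by (clear; induction k; simpl; lra).
  assert ((Rsum k y + y k) * (Rsum k y + y k) <= 2 * (Rsum k y * Rsum k y) + 2 * (y k * y k)).
  { pose proof (Rle_0_sqr (Rsum k y - y k)); unfold Rsqr in *; lra. }
  assert (0 <= (2^k - 1) * (y k * y k)) by (apply Rmult_le_pos; nra).
  lra.
Qed.

Lemma Nsum_le k f g : (forall j, (j < k)%nat -> (f j <= g j)%nat) -> (Nsum k f <= Nsum k g)%nat.
Proof. induction k; simpl; intros; auto. pose proof (H k ltac:(lia)). pose proof (IHk ltac:(intros; apply H; lia)). lia. Qed.
Lemma Nsum_lin k a b f : Nsum k (fun j => a + b * f j)%nat = (k * a + b * Nsum k f)%nat.
Proof. induction k; simpl. lia. rewrite IHk. lia. Qed.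

Lemma fchoice {B : Type} (b0 : B) (k : nat) (P : nat -> B -> Prop) :
  (forall j, (j < k)%nat -> exists x, P j x) ->
  exists f : nat -> B, forall j, (j < k)%nat -> P j (f j).
Proof.
  intros H.
  assert (H' : forall j, exists x, (j < k)%nat -> P j x).
  { intro j. destruct (classic (j < k)%nat) as [Hj|Hj].
    - destruct (H j Hj) as [x Hx]; exists x; auto.
    - exists b0; intro; contradiction. }
  exists (fun j => proj1_sig (constructive_indefinite_description _ (H' j))).
  intros j Hj. destruct (constructive_indefinite_description _ (H' j)); simpl; auto.
Qed.

(** * Linear independence in C^d *)

Definition indep (d k : nat) (w : nat -> cvec) : Prop :=
  forall c : nat -> Cx,
    (forall i, (i < d)%nat -> Csum k (fun j => Cmul (c j) (w j i)) = C0) ->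
    forall j, (j < k)%nat -> c j = C0.

(* Enumeration of {0, ..., m} \ {p}. *)
Definition skip (p j : nat) : nat := if Nat.ltb j p then j else S j.

Lemma Csum_skip m p f : (p < S m)%nat ->
  Csum (S m) f = Cadd (f p) (Csum m (fun j => f (skip p j))).
Proof.
  revert p. induction m; intros p Hp.
  - assert (p = 0%nat) by lia; subst. simpl. cring.
  - change (Csum (S (S m)) f) with (Cadd (Csum (S m) f) (f (S m))).
    destruct (Nat.eq_dec p (S m)).
    + subst. rewrite (Csum_ext (S m) (fun j => f (skip (S m) j)) f); [cring|].
      intros j Hj. unfold skip. destruct (Nat.ltb_spec j (S m)); auto; lia.
    + rewrite (IHm p) by lia.
      change (Csum (S m) (fun j => f (skip p j)))
        with (Cadd (Csum m (fun j => f (skip p j))) (f (skip p m))).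
      unfold skip at 3. destruct (Nat.ltb_spec m p); [lia|]. cring.
Qed.

Lemma indep_drop_coord d k w : (forall j, (j < k)%nat -> w j d = C0) ->
  indep (S d) k w -> indep d k w.
Proof.
  intros Hw H c Hc. apply H. intros i Hi. destruct (Nat.eq_dec i d).
  - subst. apply Csum_zero. intros j Hj. rewrite Hw by auto. apply Cmul_0r.
  - apply Hc; lia.
Qed.

(* One step of Gaussian elimination: using a pivot w_p with nonzero last
   coordinate, clearing the last coordinate of the other vectors preserves
   independence. *)
Lemma indep_eliminate d k w p : (p < S k)%nat -> w p d <> C0 ->
  indep (S d) (S k) w ->
  indep d k (fun j i => Csub (w (skip p j) i) (Cmul (Cmul (w (skip p j) d) (Cinv (w p d))) (w p i))).
Proof.
  intros Hp Hpiv H c Hc.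
  set (r := fun j => Cmul (w (skip p j) d) (Cinv (w p d))).
  set (s := Csum k (fun j => Cmul (c j) (r j))).
  set (c' := fun l => if Nat.eqb l p then Csub C0 s else c (if Nat.ltb l p then l else pred l)).
  assert (Hc'skip : forall j, c' (skip p j) = c j).
  { intro j. unfold c', skip. destruct (Nat.ltb_spec j p).
    - destruct (Nat.eqb_spec j p); [lia|]. destruct (Nat.ltb_spec j p); [auto|lia].
    - destruct (Nat.eqb_spec (S j) p); [lia|]. destruct (Nat.ltb_spec (S j) p); [lia|auto]. }
  assert (Hexp : forall i, Csum (S k) (fun l => Cmul (c' l) (w l i)) =
      Csum k (fun j => Cmul (c j) (Csub (w (skip p j) i) (Cmul (r j) (w p i))))).
  { intro i. rewrite (Csum_skip k p) by lia.
    rewrite (Csum_ext k _ (fun j => Cmul (c j) (w (skip p j) i))) by (intros; rewrite Hc'skip; auto).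
    rewrite (Csum_ext k (fun j => Cmul (c j) (Csub _ _))
      (fun j => Csub (Cmul (c j) (w (skip p j) i)) (Cmul (Cmul (c j) (r j)) (w p i)))) by (intros; cring).
    rewrite Csum_sub, Csum_scal_r. fold s. unfold c'. rewrite Nat.eqb_refl. cring. }
  assert (Hz : forall i, (i < S d)%nat -> Csum (S k) (fun l => Cmul (c' l) (w l i)) = C0).
  { intros i Hi. rewrite Hexp. destruct (Nat.eq_dec i d).
    - subst. apply Csum_zero. intros j Hj. unfold r.
      rewrite Cmul_assoc, (Cmul_comm (Cinv _)), Cmul_inv by auto. cring.
    - apply Hc; lia. }
  intros j Hj. rewrite <- Hc'skip. apply H; auto. unfold skip; destruct (Nat.ltb_spec j p); lia.
Qed.

Lemma indep_le d : forall k w, indep d k w -> (k <= d)%nat.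
Proof.
  induction d; intros k w H.
  - destruct k; [lia|]. exfalso. apply Cone_neq0.
    apply (H (fun _ => (1,0)) ltac:(intros; lia) 0%nat); lia.
  - destruct (classic (exists p, (p < k)%nat /\ w p d <> C0)) as [[p [Hp Hpiv]]|Hn].
    + destruct k as [|k]; [lia|].
      pose proof (IHd _ _ (indep_eliminate d k w p Hp Hpiv H)). lia.
    + assert (k <= d)%nat; [|lia].
      apply (IHd k w), indep_drop_coord; auto.
      intros j Hj. apply NNPP. intro E. apply Hn; eauto.
Qed.

Lemma eigvec_indep d (L : cvec -> cvec -> Prop)
  (Hlin : forall k c xs ys, (forall l, (l<k)%nat -> L (xs l) (ys l)) ->
     L (fun i => Csum k (fun l => Cmul (c l) (xs l i)))
       (fun i => Csum k (fun l => Cmul (c l) (ys l i))))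
  (H0 : forall x y, L x y -> (forall i, (i<d)%nat -> x i = C0) -> forall i, (i<d)%nat -> y i = C0) :
  forall s xs lam, (forall l, (l<s)%nat -> L (xs l) (fun i => Cmul (lam l) (xs l i))) ->
    (forall l, (l<s)%nat -> exists i, (i<d)%nat /\ xs l i <> C0) ->
    (forall l l', (l<s)%nat -> (l'<s)%nat -> lam l = lam l' -> l = l') -> indep d s xs.
Proof.
  induction s; intros xs lam HL Hnz Hd.
  - intros c _ j Hj; lia.
  - intros c Hc.
    (* Applying L to the relation and subtracting lam_s times it kills x_s. *)
    pose proof (H0 _ _ (Hlin (S s) c xs (fun l i => Cmul (lam l) (xs l i)) HL) Hc) as HY.
    set (c2 := fun l => Cmul (c l) (Csub (lam l) (lam s))).
    assert (Hc2 : forall i, (i < d)%nat -> Csum s (fun l => Cmul (c2 l) (xs l i)) = C0).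
    { intros i Hi. specialize (HY i Hi). specialize (Hc i Hi). simpl in HY, Hc.
      apply Cadd_eq0 in HY. apply Cadd_eq0 in Hc.
      rewrite (Csum_ext s _ (fun l => Csub (Cmul (c l) (Cmul (lam l) (xs l i)))
                                            (Cmul (lam s) (Cmul (c l) (xs l i)))))
        by (intros; unfold c2; cring).
      rewrite Csum_sub, Csum_scal, HY, Hc. cring. }
    assert (Hlow : forall l, (l < s)%nat -> c l = C0).
    { intros l Hl.
      pose proof (IHs xs lam ltac:(intros; apply HL; lia) ltac:(intros; apply Hnz; lia)
         ltac:(intros; apply Hd; auto; lia) c2 Hc2 l Hl) as E.
      apply Cmul_eq0 in E. destruct E as [E|E]; auto.
      apply Csub_eq0, Hd in E; lia. }
    intros j Hj. destruct (Nat.eq_dec j s); [|apply Hlow; lia]. subst.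
    destruct (Hnz s ltac:(lia)) as [i [Hi Hne]].
    specialize (Hc i Hi). simpl in Hc. rewrite Csum_zero in Hc by (intros; rewrite Hlow by auto; cring).
    rewrite Cadd_0l in Hc. apply Cmul_eq0 in Hc. destruct Hc; [auto|contradiction].
Qed.

Lemma D_eq f x l l' : derivable_pt_lim f x l -> l = l' -> derivable_pt_lim f x l'.
Proof. intros; subst; auto. Qed.

Lemma D_Rsum k (f f' : nat -> R -> R) t :
  (forall j, (j < k)%nat -> derivable_pt_lim (f j) t (f' j t)) ->
  derivable_pt_lim (fun s => Rsum k (fun j => f j s)) t (Rsum k (fun j => f' j t)).
Proof.
  induction k; intros H; simpl.
  - apply derivable_pt_lim_const.
  - apply (derivable_pt_lim_plus (fun s => Rsum k (fun j => f j s))).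
    apply IHk; intros; apply H; lia. apply H; lia.
Qed.

Lemma C_Rsum k (f : nat -> R -> R) t : (forall j, (j < k)%nat -> continuity_pt (f j) t) ->
  continuity_pt (fun s => Rsum k (fun j => f j s)) t.
Proof.
  induction k; intros H; simpl.
  - apply continuity_pt_const. intros x y; auto.
  - apply (continuity_pt_plus (fun s => Rsum k (fun j => f j s))).
    apply IHk; intros; apply H; lia. apply H; lia.
Qed.

Lemma D_cont f x l : derivable_pt_lim f x l -> continuity_pt f x.
Proof. intro H. apply derivable_continuous_pt. exists l; auto. Qed.

Lemma cinf_cont f : Cinf f -> forall t, continuity_pt f t.
Proof. intros [d [H0 H]] t. subst. eapply D_cont; apply H. Qed.

Lemma cinf_deriv_cont f f' : Cinf f -> (forall t, derivable_pt_lim f t (f' t)) ->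
  forall t, continuity_pt f' t.
Proof.
  intros [d [H0 H]] Hf t.
  assert (E : f' = d 1%nat).
  { apply functional_extensionality; intro s. eapply uniqueness_limite. apply Hf. subst; apply H. }
  rewrite E. eapply D_cont; apply H.
Qed.

Lemma mono_dec g g' a b : (forall t, derivable_pt_lim g t (g' t)) -> a < b ->
  (forall c, a < c < b -> g' c <= 0) -> g b <= g a.
Proof.
  intros Hd Hab Hs.
  set (pr := (fun c => exist _ (g' c) (Hd c)) : derivable g).
  destruct (MVT_cor1 g a b pr Hab) as [c [E Hc]].
  simpl in E. specialize (Hs c Hc). nra.
Qed.

Lemma const_deriv0 (g : R -> R) : (forall t, derivable_pt_lim g t 0) -> g 1 = g 0.
Proof.
  intros Hg. set (pr := (fun c => exist _ 0 (Hg c)) : derivable g).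
  destruct (MVT_cor1 g 0 1 pr ltac:(lra)) as [c [E _]]. simpl in E. lra.
Qed.

Lemma D_exp_lin L t : derivable_pt_lim (fun s => exp (L * s)) t (L * exp (L * t)).
Proof.
  eapply D_eq; [apply (derivable_pt_lim_comp (fun s => L * s) exp t L (exp (L * t)))|ring].
  - eapply D_eq; [apply derivable_pt_lim_mult; [apply derivable_pt_lim_const|apply derivable_pt_lim_id]|].
    unfold id; ring.
  - apply derivable_pt_lim_exp.
Qed.

Lemma gronwall (E E' : R -> R) (L T : R) :
  (forall t, derivable_pt_lim E t (E' t)) -> (forall t, 0 <= E t) -> E 0 = 0 ->
  (forall t, -T <= t <= T -> E' t <= L * E t /\ - (L * E t) <= E' t) ->
  forall t, -T <= t <= T -> E t = 0.
Proof.
  intros Hd Hp H0 Hb t Ht.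
  destruct (Rtotal_order t 0) as [Hlt|[Heq|Hgt]].
  - (* E(s) exp(L s) increases on [t, 0] *)
    set (G := fun s => E s * exp (L * s)).
    assert (HG : forall s, derivable_pt_lim G s (E' s * exp (L * s) + E s * (L * exp (L * s)))).
    { intro s. apply (derivable_pt_lim_mult E (fun s => exp (_ * s))); auto. apply D_exp_lin. }
    assert (G t <= G 0).
    { apply Ropp_le_cancel.
      apply (mono_dec (fun s => - G s) (fun s => - (E' s * exp (L * s) + E s * (L * exp (L * s))))); auto.
      intro s; apply derivable_pt_lim_opp; auto.
      intros c Hc. pose proof (exp_pos (L * c)). destruct (Hb c ltac:(lra)).
      assert (0 <= (E' c + L * E c) * exp (L*c)) by (apply Rmult_le_pos; lra). nra. }
    unfold G in H. rewrite H0 in H. pose proof (exp_pos (L * t)). pose proof (Hp t). nra.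
  - subst; auto.
  - (* E(s) exp(-L s) decreases on [0, t] *)
    set (G := fun s => E s * exp ((- L) * s)).
    assert (HG : forall s, derivable_pt_lim G s (E' s * exp ((-L) * s) + E s * ((-L) * exp ((-L) * s)))).
    { intro s. apply (derivable_pt_lim_mult E (fun s => exp (_ * s))); auto. apply D_exp_lin. }
    assert (G t <= G 0).
    { apply (mono_dec G _ 0 t HG Hgt).
      intros c Hc. pose proof (exp_pos ((-L) * c)). destruct (Hb c ltac:(lra)).
      assert (0 <= (L * E c - E' c) * exp ((-L)*c)) by (apply Rmult_le_pos; lra). nra. }
    unfold G in H. rewrite H0 in H. pose proof (exp_pos ((-L) * t)). pose proof (Hp t). nra.
Qed.

Definition cd (f f' : R -> Cx) : Prop := forall t,
  derivable_pt_lim (fun s => fst (f s)) t (fst (f' t)) /\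
  derivable_pt_lim (fun s => snd (f s)) t (snd (f' t)).

Lemma cderiv_cd n V W :
  cderiv n V W <-> forall i, (i < n)%nat -> cd (fun s => V s i) (fun s => W s i).
Proof. unfold cderiv, cd; split; intros H; intros; apply H; auto. Qed.

Lemma cd_ext f f' g g' : (forall s, f s = g s) -> (forall s, f' s = g' s) -> cd f f' -> cd g g'.
Proof.
  intros E E'; replace g with f by (apply functional_extensionality; auto);
  replace g' with f' by (apply functional_extensionality; auto); auto.
Qed.
Lemma cd_unique f f1 f2 : cd f f1 -> cd f f2 -> forall t, f1 t = f2 t.
Proof. intros H1 H2 t; destruct (H1 t), (H2 t). apply Ceq; eapply uniqueness_limite; eauto. Qed.
Lemma cd_const c : cd (fun _ => c) (fun _ => C0).
Proof. intro t; simpl; split; apply derivable_pt_lim_const. Qed.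
Lemma cd_add f f' g g' : cd f f' -> cd g g' ->
  cd (fun s => Cadd (f s) (g s)) (fun s => Cadd (f' s) (g' s)).
Proof. intros H1 H2 t; destruct (H1 t), (H2 t); simpl; split; apply derivable_pt_lim_plus; auto. Qed.
Lemma cd_sub f f' g g' : cd f f' -> cd g g' ->
  cd (fun s => Csub (f s) (g s)) (fun s => Csub (f' s) (g' s)).
Proof. intros H1 H2 t; destruct (H1 t), (H2 t); simpl; split; apply derivable_pt_lim_minus; auto. Qed.
Lemma cd_mul f f' g g' : cd f f' -> cd g g' ->
  cd (fun s => Cmul (f s) (g s)) (fun s => Cadd (Cmul (f' s) (g s)) (Cmul (f s) (g' s))).
Proof.
  intros H1 H2 t; destruct (H1 t), (H2 t); simpl; split.
  - eapply D_eq; [apply derivable_pt_lim_minus; apply derivable_pt_lim_mult; eauto|]. simpl; ring.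
  - eapply D_eq; [apply derivable_pt_lim_plus; apply derivable_pt_lim_mult; eauto|]. simpl; ring.
Qed.
Lemma cd_conj f f' : cd f f' -> cd (fun s => Cconj (f s)) (fun s => Cconj (f' s)).
Proof. intros H t; destruct (H t); simpl; split; auto. apply derivable_pt_lim_opp; auto. Qed.
Lemma cd_RtoC g g' : (forall t, derivable_pt_lim g t (g' t)) ->
  cd (fun s => RtoC (g s)) (fun s => RtoC (g' s)).
Proof. intros H t; simpl; split; auto. apply derivable_pt_lim_const. Qed.
Lemma cd_scal a f f' : cd f f' -> cd (fun s => Cmul a (f s)) (fun s => Cmul a (f' s)).
Proof.
  intro H. eapply cd_ext; [| |apply (cd_mul (fun _ => a) (fun _ => C0)); [apply cd_const|apply H]].
  all: intros; cring.
Qed.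
Lemma cd_Csum k (f f' : nat -> R -> Cx) : (forall j, (j < k)%nat -> cd (f j) (f' j)) ->
  cd (fun s => Csum k (fun j => f j s)) (fun s => Csum k (fun j => f' j s)).
Proof.
  induction k; intros H; simpl.
  - apply cd_const.
  - apply (cd_add (fun s => Csum k (fun j => f j s))). apply IHk; intros; apply H; lia. apply H; lia.
Qed.

Lemma matact_ext n A u v i : (forall l, (l < n)%nat -> u l = v l) -> matact n A u i = matact n A v i.
Proof. intros; unfold matact; apply Csum_ext; intros; rewrite H; auto. Qed.
Lemma matact_zero n A u i : (forall l, (l < n)%nat -> u l = C0) -> matact n A u i = C0.
Proof. intros; unfold matact; apply Csum_zero; intros; rewrite H; auto; cring. Qed.
Lemma matact_add n A u v i :
  matact n A (fun l => Cadd (u l) (v l)) i = Cadd (matact n A u i) (matact n A v i).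
Proof. unfold matact. rewrite <- Csum_add. apply Csum_ext; intros; cring. Qed.
Lemma matact_lin n A k (c : nat -> Cx) (v : nat -> cvec) i :
  matact n A (fun l => Csum k (fun j => Cmul (c j) (v j l))) i =
  Csum k (fun j => Cmul (c j) (matact n A (v j) i)).
Proof.
  unfold matact.
  rewrite (Csum_ext n _ (fun l => Csum k (fun j => Cmul (c j) (Cmul (RtoC (A i l)) (v j l))))).
  - rewrite Csum_swap. apply Csum_ext; intros; rewrite Csum_scal; auto.
  - intros l _. rewrite <- Csum_scal. apply Csum_ext; intros; cring.
Qed.
Lemma matact_matmul n A B v i : matact n (matmul n A B) v i = matact n A (fun l => matact n B v l) i.
Proof.
  unfold matact, matmul.
  rewrite (Csum_ext n _ (fun j => Csum n (fun k => Cmul (RtoC (A i k)) (Cmul (RtoC (B k j)) (v j))))).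
  - rewrite Csum_swap. apply Csum_ext; intros; rewrite Csum_scal; auto.
  - intros j Hj. rewrite RtoC_Rsum, <- Csum_scal_r. apply Csum_ext; intros. cring.
Qed.
Lemma fst_matact n A v i : fst (matact n A v i) = Rsum n (fun j => A i j * fst (v j)).
Proof. unfold matact. rewrite fst_Csum. apply Rsum_ext; intros; simpl; ring. Qed.
Lemma snd_matact n A v i : snd (matact n A v i) = Rsum n (fun j => A i j * snd (v j)).
Proof. unfold matact. rewrite snd_Csum. apply Rsum_ext; intros; simpl; ring. Qed.

Lemma cd_matact n A A' U U' i :
  (forall a b, (a < n)%nat -> (b < n)%nat -> forall t,
     derivable_pt_lim (fun s => A s a b) t (A' t a b)) ->
  (forall j, (j < n)%nat -> cd (fun s => U s j) (fun s => U' s j)) -> (i < n)%nat ->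
  cd (fun s => matact n (A s) (U s) i)
     (fun s => Cadd (matact n (A' s) (U s) i) (matact n (A s) (U' s) i)).
Proof.
  intros HA HU Hi. unfold matact.
  eapply cd_ext; [intros; reflexivity| |].
  2:{ apply (cd_Csum n (fun j s => Cmul (RtoC (A s i j)) (U s j))). intros j Hj.
      apply (cd_mul (fun s => RtoC (A s i j)) (fun s => RtoC (A' s i j))).
      apply cd_RtoC. intros; apply HA; auto. apply HU; auto. }
  intros s. simpl. rewrite <- Csum_add. auto.
Qed.

Section Gform.
Variables (n : nat) (eps : nat -> R).

Lemma Gform_ext u u' v v' : (forall j, (j < n)%nat -> u j = u' j /\ v j = v' j) ->
  Gform n eps u v = Gform n eps u' v'.
Proof. intros H; unfold Gform; apply Csum_ext; intros j Hj; destruct (H j Hj) as [A B]; rewrite A, B; auto. Qed.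
Lemma Gform_addl a b v : Gform n eps (fun i => Cadd (a i) (b i)) v = Cadd (Gform n eps a v) (Gform n eps b v).
Proof. unfold Gform; rewrite <- Csum_add; apply Csum_ext; intros; cring. Qed.
Lemma Gform_subl a b v : Gform n eps (fun i => Csub (a i) (b i)) v = Csub (Gform n eps a v) (Gform n eps b v).
Proof. unfold Gform; rewrite <- Csum_sub; apply Csum_ext; intros; cring. Qed.
Lemma Gform_addr a b v : Gform n eps v (fun i => Cadd (a i) (b i)) = Cadd (Gform n eps v a) (Gform n eps v b).
Proof. unfold Gform; rewrite <- Csum_add; apply Csum_ext; intros; cring. Qed.
Lemma Gform_subr a b v : Gform n eps v (fun i => Csub (a i) (b i)) = Csub (Gform n eps v a) (Gform n eps v b).
Proof. unfold Gform; rewrite <- Csum_sub; apply Csum_ext; intros; cring. Qed.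
Lemma Gform_zero_l u v : (forall j, (j<n)%nat -> u j = C0) -> Gform n eps u v = C0.
Proof. intros H; unfold Gform; apply Csum_zero; intros; rewrite H; auto; cring. Qed.
Lemma Gform_zero_r u v : (forall j, (j<n)%nat -> v j = C0) -> Gform n eps u v = C0.
Proof. intros H; unfold Gform; apply Csum_zero; intros; rewrite H; auto; cring. Qed.
Lemma Gform_scal_r z u v :
  Gform n eps u (fun i => Cmul z (v i)) = Gform n eps (fun i => Cmul (Cconj z) (u i)) v.
Proof. unfold Gform; apply Csum_ext; intros; cring. Qed.

Lemma Gform_lin_l k c u v : Gform n eps (fun i => Csum k (fun l => Cmul (c l) (u l i))) v =
  Csum k (fun l => Cmul (c l) (Gform n eps (u l) v)).
Proof.
  unfold Gform.
  rewrite (Csum_ext n _ (fun i => Csum k (fun l => Cmul (c l) (Cmul (RtoC (eps i)) (Cmul (u l i) (Cconj (v i))))))).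
  - rewrite Csum_swap. apply Csum_ext; intros. rewrite Csum_scal; auto.
  - intros. rewrite <- Csum_scal_r, <- Csum_scal. apply Csum_ext; intros; cring.
Qed.
Lemma Gform_lin_r k c u v : Gform n eps u (fun i => Csum k (fun j => Cmul (c j) (v j i))) =
  Csum k (fun j => Cmul (Cconj (c j)) (Gform n eps u (v j))).
Proof.
  unfold Gform.
  rewrite (Csum_ext n _ (fun i => Csum k (fun j => Cmul (Cconj (c j)) (Cmul (RtoC (eps i)) (Cmul (u i) (Cconj (v j i))))))).
  - rewrite Csum_swap. apply Csum_ext; intros. rewrite Csum_scal; auto.
  - intros. rewrite Csum_conj, <- Csum_scal, <- Csum_scal. apply Csum_ext; intros; cring.
Qed.

Lemma Gform_matact_l A u v : Gform n eps (matact n A u) v =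
  Csum n (fun i => Csum n (fun j => Cmul (RtoC (eps i * A i j)) (Cmul (u j) (Cconj (v i))))).
Proof.
  unfold Gform, matact. apply Csum_ext. intros i Hi.
  rewrite <- Csum_scal_r, <- Csum_scal. apply Csum_ext; intros; cring.
Qed.
Lemma Gform_matact_r A u v : Gform n eps u (matact n A v) =
  Csum n (fun i => Csum n (fun j => Cmul (RtoC (eps j * A j i)) (Cmul (u j) (Cconj (v i))))).
Proof.
  unfold Gform, matact.
  rewrite (Csum_ext n _ (fun j => Csum n (fun i => Cmul (RtoC (eps j * A j i)) (Cmul (u j) (Cconj (v i)))))).
  - apply Csum_swap.
  - intros j Hj. rewrite Csum_conj, <- Csum_scal, <- Csum_scal. apply Csum_ext; intros; cring.
Qed.

Lemma Gform_skew A u v :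
  (forall i j, (i<n)%nat -> (j<n)%nat -> eps i * A i j + eps j * A j i = 0) ->
  Cadd (Gform n eps (matact n A u) v) (Gform n eps u (matact n A v)) = C0.
Proof.
  intros H. rewrite Gform_matact_l, Gform_matact_r, <- Csum_add.
  apply Csum_zero. intros i Hi. rewrite <- Csum_add. apply Csum_zero. intros j Hj.
  replace (eps j * A j i) with (- (eps i * A i j)) by (specialize (H i j Hi Hj); lra). cring.
Qed.

Lemma Gform_sym A u v : (forall i j, (i<n)%nat -> (j<n)%nat -> eps i * A i j = eps j * A j i) ->
  Gform n eps (matact n A u) v = Gform n eps u (matact n A v).
Proof.
  intros H. rewrite Gform_matact_l, Gform_matact_r.
  apply Csum_ext. intros i Hi. apply Csum_ext. intros j Hj. rewrite (H i j Hi Hj). auto.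
Qed.

Lemma cd_Gform U U' W W' :
  (forall j, (j < n)%nat -> cd (fun s => U s j) (fun s => U' s j)) ->
  (forall j, (j < n)%nat -> cd (fun s => W s j) (fun s => W' s j)) ->
  cd (fun s => Gform n eps (U s) (W s))
     (fun s => Cadd (Gform n eps (U' s) (W s)) (Gform n eps (U s) (W' s))).
Proof.
  intros HU HW. unfold Gform.
  eapply cd_ext; [intros; reflexivity| |].
  2:{ apply (cd_Csum n (fun j s => Cmul (RtoC (eps j)) (Cmul (U s j) (Cconj (W s j))))). intros j Hj.
      apply (cd_mul (fun s => RtoC (eps j)) (fun s => C0)). apply cd_const.
      apply cd_mul. apply HU; auto. apply cd_conj. apply HW; auto. }
  intros s. simpl. rewrite <- Csum_add. apply Csum_ext; intros; cring.
Qed.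

End Gform.

(** * The Jacobi equation *)

Section Jacobi.
Variables (n : nat) (Gam dGam Rb : R -> rmat).

Definition Mco (t : R) : rmat :=
  fun a b => dGam t a b + matmul n (Gam t) (Gam t) a b - Rb t a b.

Definition jac3 (V V1 V2 : R -> cvec) : Prop :=
  (forall t, in_dim n (V t)) /\ cderiv n V V1 /\ cderiv n V1 V2 /\
  forall t i, (i < n)%nat ->
    Cadd (Cadd (V2 t i) (Cmul (RtoC 2) (matact n (Gam t) (V1 t) i)))
         (matact n (Mco t) (V t) i) = C0.

Lemma jacobi_jac3 V : jacobi n Gam dGam Rb V <-> exists V1 V2, jac3 V V1 V2.
Proof.
  unfold jacobi, jac3, Mco; split.
  - intros [H [V1 [V2 [A [B C]]]]]; exists V1, V2; auto.
  - intros [V1 [V2 [H [A [B C]]]]]; split; auto; exists V1, V2; auto.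
Qed.

Lemma jac3_lincomb k c Vs V1s V2s :
  (forall j, (j < k)%nat -> jac3 (Vs j) (V1s j) (V2s j)) ->
  jac3 (lincomb k c Vs) (lincomb k c V1s) (lincomb k c V2s).
Proof.
  intros H. unfold lincomb. split; [|split; [|split]].
  - intros t i Hi. apply Csum_zero. intros j Hj. destruct (H j Hj) as [A _]. rewrite (A t i Hi). cring.
  - apply cderiv_cd. intros i Hi.
    apply (cd_Csum k (fun j s => Cmul (c j) (Vs j s i))). intros j Hj. apply cd_scal.
    destruct (H j Hj) as [_ [B _]]. apply (proj1 (cderiv_cd _ _ _) B); auto.
  - apply cderiv_cd. intros i Hi.
    apply (cd_Csum k (fun j s => Cmul (c j) (V1s j s i))). intros j Hj. apply cd_scal.
    destruct (H j Hj) as [_ [_ [B _]]]. apply (proj1 (cderiv_cd _ _ _) B); auto.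
  - intros t i Hi. rewrite !matact_lin, <- Csum_scal, <- !Csum_add. apply Csum_zero. intros j Hj.
    destruct (H j Hj) as [_ [_ [_ E]]]. specialize (E t i Hi).
    transitivity (Cmul (c j) (Cadd (Cadd (V2s j t i) (Cmul (RtoC 2) (matact n (Gam t) (V1s j t) i)))
                                  (matact n (Mco t) (Vs j t) i))).
    + change (fun l => V1s j t l) with (V1s j t); change (fun l => Vs j t l) with (Vs j t); cring.
    + rewrite E; cring.
Qed.

Definition energy (V V1 : R -> cvec) (t : R) : R :=
  Rsum n (fun i => fst (V t i) * fst (V t i) + snd (V t i) * snd (V t i)
                 + fst (V1 t i) * fst (V1 t i) + snd (V1 t i) * snd (V1 t i)).
Definition denergy (V V1 V2 : R -> cvec) (t : R) : R :=
  Rsum n (fun i => 2 * (fst (V t i) * fst (V1 t i)) + 2 * (snd (V t i) * snd (V1 t i))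
                 + 2 * (fst (V1 t i) * fst (V2 t i)) + 2 * (snd (V1 t i) * snd (V2 t i))).

Lemma energy_deriv V V1 V2 : cderiv n V V1 -> cderiv n V1 V2 ->
  forall t, derivable_pt_lim (energy V V1) t (denergy V V1 V2 t).
Proof.
  intros H1 H2 t. unfold energy, denergy.
  apply (D_Rsum n (fun i s => fst (V s i) * fst (V s i) + snd (V s i) * snd (V s i)
                 + fst (V1 s i) * fst (V1 s i) + snd (V1 s i) * snd (V1 s i))
     (fun i t => 2 * (fst (V t i) * fst (V1 t i)) + 2 * (snd (V t i) * snd (V1 t i))
                 + 2 * (fst (V1 t i) * fst (V2 t i)) + 2 * (snd (V1 t i) * snd (V2 t i)))).
  intros i Hi. destruct (H1 i t Hi) as [a b]. destruct (H2 i t Hi) as [c d].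
  eapply D_eq; [apply derivable_pt_lim_plus; [apply derivable_pt_lim_plus;
    [apply derivable_pt_lim_plus|]|]; apply derivable_pt_lim_mult; eauto|].
  cbv beta; ring.
Qed.

Lemma energy_nonneg V V1 t : 0 <= energy V V1 t.
Proof. unfold energy; apply Rsum_nonneg; intros; nra. Qed.

Lemma matrow_bound (a x : nat -> R) H : (forall j, (j<n)%nat -> a j * a j <= H) ->
  Rsum n (fun j => a j * x j) * Rsum n (fun j => a j * x j) <= 2 ^ n * H * Rsum n (fun j => x j * x j).
Proof.
  intros Ha. eapply Rle_trans; [apply Rsum_sq|].
  assert (1 <= 2 ^ n) by (clear; induction n; simpl; lra).
  rewrite Rmult_assoc. apply Rmult_le_compat_l; [lra|].
  rewrite <- Rsum_scal. apply Rsum_le. intros j Hj. specialize (Ha j Hj).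
  assert (0 <= x j * x j) by nra. nra.
Qed.

(* The scalar inequality behind the acceleration bound:
   (2a + b)^2 <= 8 a^2 + 2 b^2. *)
Lemma accel_arith a1 a2 b1 b2 s1 s2 s3 s4 P : 0 <= P ->
  0 <= s1 -> 0 <= s2 -> 0 <= s3 -> 0 <= s4 ->
  a1 * a1 <= P * s3 -> a2 * a2 <= P * s4 -> b1 * b1 <= P * s1 -> b2 * b2 <= P * s2 ->
  (- (2 * a1 + b1)) * (- (2 * a1 + b1)) + (- (2 * a2 + b2)) * (- (2 * a2 + b2))
    <= 10 * P * (s1 + s2 + s3 + s4).
Proof.
  intros HP H1 H2 H3 H4 B1 B2 B3 B4.
  pose proof (Rle_0_sqr (2 * a1 - b1)). pose proof (Rle_0_sqr (2 * a2 - b2)). unfold Rsqr in *.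
  assert (0 <= P * s1 /\ 0 <= P * s2 /\ 0 <= P * s3 /\ 0 <= P * s4) by (repeat split; nra).
  nra.
Qed.

Lemma accel_bound V V1 V2 t i H : jac3 V V1 V2 -> (i < n)%nat ->
  (forall a b, (a < n)%nat -> (b < n)%nat ->
     Gam t a b * Gam t a b <= H /\ Mco t a b * Mco t a b <= H) ->
  fst (V2 t i) * fst (V2 t i) + snd (V2 t i) * snd (V2 t i) <= 10 * 2 ^ n * H * energy V V1 t.
Proof.
  intros [_ [_ [_ J]]] Hi HH. specialize (J t i Hi). split_eq J.
  rewrite !fst_matact, !snd_matact in *.
  assert (HA : forall j, (j<n)%nat -> Gam t i j * Gam t i j <= H) by (intros; apply HH; auto).
  assert (HM : forall j, (j<n)%nat -> Mco t i j * Mco t i j <= H) by (intros; apply HH; auto).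
  assert (Hs : forall f, 0 <= Rsum n (fun j => f j * f j)) by (intros; apply Rsum_nonneg; intros; nra).
  assert (0 <= H) by (destruct n; [lia|]; specialize (HA 0%nat ltac:(lia)); nra).
  assert (1 <= 2 ^ n) by (clear; induction n; simpl; lra).
  replace (energy V V1 t) with
    (Rsum n (fun j => fst (V t j) * fst (V t j)) + Rsum n (fun j => snd (V t j) * snd (V t j)) +
     Rsum n (fun j => fst (V1 t j) * fst (V1 t j)) + Rsum n (fun j => snd (V1 t j) * snd (V1 t j)))
    by (unfold energy; rewrite <- !Rsum_add; auto).
  replace (fst (V2 t i)) with
    (- (2 * Rsum n (fun j => Gam t i j * fst (V1 t j)) + Rsum n (fun j => Mco t i j * fst (V t j)))) by lra.
  replace (snd (V2 t i)) with
    (- (2 * Rsum n (fun j => Gam t i j * snd (V1 t j)) + Rsum n (fun j => Mco t i j * snd (V t j)))) by lra.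
  replace (10 * 2 ^ n * H) with (10 * (2 ^ n * H)) by ring.
  apply accel_arith; try apply (Hs (fun j => _)); [nra|..]; apply matrow_bound; auto.
Qed.

Lemma denergy_bound V V1 V2 t H : jac3 V V1 V2 ->
  (forall a b, (a < n)%nat -> (b < n)%nat ->
     Gam t a b * Gam t a b <= H /\ Mco t a b * Mco t a b <= H) ->
  denergy V V1 V2 t <= (2 + INR n * (10 * 2 ^ n * H)) * energy V V1 t /\
  - ((2 + INR n * (10 * 2 ^ n * H)) * energy V V1 t) <= denergy V V1 V2 t.
Proof.
  intros J HH.
  set (q := fun i => fst (V2 t i) * fst (V2 t i) + snd (V2 t i) * snd (V2 t i)).
  set (ei := fun i => fst (V t i) * fst (V t i) + snd (V t i) * snd (V t i)
                 + fst (V1 t i) * fst (V1 t i) + snd (V1 t i) * snd (V1 t i)).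
  assert (Hq : Rsum n q <= INR n * (10 * 2 ^ n * H * energy V V1 t)).
  { rewrite <- Rsum_const. apply Rsum_le. intros i Hi. apply (accel_bound V V1 V2 t i H J Hi HH). }
  assert (Hs : Rsum n (fun i => 2 * ei i + q i) = 2 * energy V V1 t + Rsum n q).
  { rewrite Rsum_add, Rsum_scal. auto. }
  assert (E1 : denergy V V1 V2 t <= Rsum n (fun i => 2 * ei i + q i)).
  { unfold denergy. apply Rsum_le. intros i Hi. unfold ei, q.
    pose proof (Rle_0_sqr (fst (V t i) - fst (V1 t i))).
    pose proof (Rle_0_sqr (snd (V t i) - snd (V1 t i))).
    pose proof (Rle_0_sqr (fst (V1 t i) - fst (V2 t i))).
    pose proof (Rle_0_sqr (snd (V1 t i) - snd (V2 t i))). unfold Rsqr in *. nra. }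
  assert (E2 : - denergy V V1 V2 t <= Rsum n (fun i => 2 * ei i + q i)).
  { unfold denergy. rewrite <- Rsum_opp. apply Rsum_le. intros i Hi. unfold ei, q.
    pose proof (Rle_0_sqr (fst (V t i) + fst (V1 t i))).
    pose proof (Rle_0_sqr (snd (V t i) + snd (V1 t i))).
    pose proof (Rle_0_sqr (fst (V1 t i) + fst (V2 t i))).
    pose proof (Rle_0_sqr (snd (V1 t i) + snd (V2 t i))). unfold Rsqr in *. nra. }
  rewrite Hs in E1, E2. split; nra.
Qed.

Hypothesis HcontG : forall a b, (a < n)%nat -> (b < n)%nat ->
  forall t, continuity_pt (fun s => Gam s a b) t.
Hypothesis HcontM : forall a b, (a < n)%nat -> (b < n)%nat ->
  forall t, continuity_pt (fun s => Mco s a b) t.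

Lemma coeff_bound T : -T <= T -> exists H, forall s, -T <= s <= T ->
  forall a b, (a < n)%nat -> (b < n)%nat ->
    Gam s a b * Gam s a b <= H /\ Mco s a b * Mco s a b <= H.
Proof.
  intros HT.
  set (row := fun s a => Rsum n (fun b => Gam s a b * Gam s a b + Mco s a b * Mco s a b)).
  set (h := fun s => Rsum n (fun a => row s a)).
  assert (Hh : forall c, continuity_pt h c).
  { intro c. apply (C_Rsum n (fun a s => row s a)). intros a Ha.
    apply (C_Rsum n (fun b s => _)). intros b Hb.
    apply (continuity_pt_plus (fun s => Gam s a b * Gam s a b)).
    - apply (continuity_pt_mult (fun s => Gam s a b)); auto.
    - apply (continuity_pt_mult (fun s => Mco s a b)); auto. }
  destruct (continuity_ab_maj h (-T) T HT (fun c _ => Hh c)) as [Mx [HM _]].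
  exists (h Mx). intros s Hs a b Ha Hb. specialize (HM s Hs).
  assert (row s a <= h s).
  { apply (Rsum_term n (row s)); auto. intros; apply Rsum_nonneg; intros; nra. }
  assert (Gam s a b * Gam s a b + Mco s a b * Mco s a b <= row s a).
  { apply (Rsum_term n (fun b => Gam s a b * Gam s a b + Mco s a b * Mco s a b)); auto. intros; nra. }
  split; nra.
Qed.

Lemma jac3_zero V V1 V2 : jac3 V V1 V2 ->
  (forall i, (i < n)%nat -> V 0 i = C0 /\ V1 0 i = C0) ->
  forall t i, (i < n)%nat -> V t i = C0 /\ V1 t i = C0.
Proof.
  intros J H0 t0 i0 Hi0.
  set (T := Rabs t0).
  assert (HT : - T <= t0 <= T) by (unfold T; pose proof (Rle_abs t0); pose proof (Rle_abs (- t0));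
    rewrite Rabs_Ropp in *; lra).
  destruct (coeff_bound T ltac:(lra)) as [H HB].
  pose proof J as [_ [JV [JV1 _]]].
  assert (Hz : energy V V1 t0 = 0).
  { apply (gronwall (energy V V1) (denergy V V1 V2) (2 + INR n * (10 * 2 ^ n * H)) T); auto.
    - apply energy_deriv; auto.
    - intro; apply energy_nonneg.
    - unfold energy. rewrite (Rsum_ext n _ (fun _ => 0)), Rsum_const; [ring|].
      intros j Hj. destruct (H0 j Hj) as [A B]. rewrite A, B. simpl. ring.
    - intros t Ht. apply denergy_bound; auto. }
  unfold energy in Hz. eapply Rsum_zero_nonneg in Hz; [| |exact Hi0].
  - cbv beta in Hz. split; apply Ceq; simpl; nra.
  - intros j Hj; cbv beta; nra.
Qed.

End Jacobi.

(** * Conservation of the symplectic pairing *)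

Section Conservation.
Variables (n : nat) (eps : nat -> R) (Gam dGam Rb : R -> rmat).
Hypothesis HdG : forall i j t, (i < n)%nat -> (j < n)%nat ->
  derivable_pt_lim (fun s => Gam s i j) t (dGam t i j).
Hypothesis Hskew : forall t i j, (i < n)%nat -> (j < n)%nat ->
  eps i * Gam t i j + eps j * Gam t j i = 0.
Hypothesis Hsym : forall t i j, (i < n)%nat -> (j < n)%nat ->
  eps i * Rb t i j = eps j * Rb t j i.

Definition pairing (V V1 W W1 : R -> cvec) (s : R) : Cx :=
  Csub (Gform n eps (fun i => Cadd (V1 s i) (matact n (Gam s) (V s) i)) (W s))
       (Gform n eps (V s) (fun i => Cadd (W1 s i) (matact n (Gam s) (W s) i))).

(* (J) in first-order form: the covariant derivative P = V' + Gamma V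
   satisfies P' = - Gamma P + Rbar V. *)
Lemma covariant_deriv V V1 V2 s i : jac3 n Gam dGam Rb V V1 V2 -> (i < n)%nat ->
  Cadd (V2 s i) (Cadd (matact n (dGam s) (V s) i) (matact n (Gam s) (V1 s) i)) =
  Cadd (Csub C0 (matact n (Gam s) (fun l => Cadd (V1 s l) (matact n (Gam s) (V s) l)) i))
       (matact n (Rb s) (V s) i).
Proof.
  intros [_ [_ [_ E]]] Hi. specialize (E s i Hi).
  replace (matact n (Mco n Gam dGam Rb s) (V s) i) with
    (Csub (Cadd (matact n (dGam s) (V s) i) (matact n (Gam s) (matact n (Gam s) (V s)) i))
          (matact n (Rb s) (V s) i)) in E.
  2:{ rewrite <- matact_matmul. unfold matact, Mco. rewrite <- Csum_add, <- Csum_sub.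
      apply Csum_ext; intros. cring. }
  rewrite matact_add.
  change (fun l => V1 s l) with (V1 s).
  revert E. generalize (V2 s i) (matact n (dGam s) (V s) i) (matact n (Gam s) (V1 s) i)
    (matact n (Gam s) (matact n (Gam s) (V s)) i) (matact n (Rb s) (V s) i).
  intros a b c d e E. split_eq E. apply Ceq; cs; lra.
Qed.

(* The pairing of two solutions has zero derivative, by skewness of Gamma
   and symmetry of Rbar. *)
Lemma pairing_const V V1 V2 W W1 W2 :
  jac3 n Gam dGam Rb V V1 V2 -> jac3 n Gam dGam Rb W W1 W2 ->
  pairing V V1 W W1 1 = pairing V V1 W W1 0.
Proof.
  intros JV JW.
  pose proof JV as [_ [DV [DV1 _]]]. pose proof JW as [_ [DW [DW1 _]]].
  rewrite cderiv_cd in DV, DV1, DW, DW1.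
  assert (HA : forall a b, (a < n)%nat -> (b < n)%nat -> forall t,
    derivable_pt_lim (fun s => Gam s a b) t (dGam t a b)) by (intros; apply HdG; auto).
  set (dpairing := fun s => Csub
     (Cadd (Gform n eps (fun i => Cadd (V2 s i) (Cadd (matact n (dGam s) (V s) i) (matact n (Gam s) (V1 s) i))) (W s))
           (Gform n eps (fun i => Cadd (V1 s i) (matact n (Gam s) (V s) i)) (W1 s)))
     (Cadd (Gform n eps (V1 s) (fun i => Cadd (W1 s i) (matact n (Gam s) (W s) i)))
           (Gform n eps (V s) (fun i => Cadd (W2 s i) (Cadd (matact n (dGam s) (W s) i) (matact n (Gam s) (W1 s) i)))))).
  assert (Hd : cd (pairing V V1 W W1) dpairing).
  { unfold pairing, dpairing. apply cd_sub.
    - apply (cd_Gform n eps (fun s i => Cadd (V1 s i) (matact n (Gam s) (V s) i))); auto.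
      intros j Hj. apply (cd_add (fun s => V1 s j)); auto. apply cd_matact; auto.
    - apply (cd_Gform n eps V V1 (fun s i => Cadd (W1 s i) (matact n (Gam s) (W s) i))); auto.
      intros j Hj. apply (cd_add (fun s => W1 s j)); auto. apply cd_matact; auto. }
  assert (Hz : forall s, dpairing s = C0).
  { intro s. unfold dpairing.
    set (P := fun i => Cadd (V1 s i) (matact n (Gam s) (V s) i)).
    set (Q := fun i => Cadd (W1 s i) (matact n (Gam s) (W s) i)).
    rewrite (Gform_ext n eps _ (fun i => Cadd (Csub C0 (matact n (Gam s) P i)) (matact n (Rb s) (V s) i)) (W s) (W s))
      by (intros j Hj; split; auto; apply covariant_deriv with (V2 := V2); auto).
    rewrite (Gform_ext n eps (V s) (V s) _ (fun i => Cadd (Csub C0 (matact n (Gam s) Q i)) (matact n (Rb s) (W s) i)))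
      by (intros j Hj; split; auto; apply covariant_deriv with (V2 := W2); auto).
    fold P Q.
    rewrite (Gform_ext n eps P P (W1 s) (fun i => Csub (Q i) (matact n (Gam s) (W s) i)))
      by (intros j Hj; split; auto; unfold Q; cring).
    rewrite (Gform_ext n eps (V1 s) (fun i => Csub (P i) (matact n (Gam s) (V s) i)) Q Q)
      by (intros j Hj; split; auto; unfold P; cring).
    rewrite Gform_addl, Gform_subl, Gform_zero_l by auto.
    rewrite Gform_subr, Gform_subl, Gform_addr, Gform_subr, (Gform_zero_r n eps (V s) (fun _ => C0)) by auto.
    pose proof (Gform_skew n eps (Gam s) P (W s) ltac:(intros; apply Hskew; auto)) as K1.
    pose proof (Gform_skew n eps (Gam s) (V s) Q ltac:(intros; apply Hskew; auto)) as K2.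
    pose proof (Gform_sym n eps (Rb s) (V s) (W s) ltac:(intros; apply Hsym; auto)) as K3.
    revert K1 K2 K3.
    generalize (Gform n eps (matact n (Gam s) P) (W s)) (Gform n eps P (matact n (Gam s) (W s)))
      (Gform n eps (matact n (Gam s) (V s)) Q) (Gform n eps (V s) (matact n (Gam s) Q))
      (Gform n eps (matact n (Rb s) (V s)) (W s)) (Gform n eps (V s) (matact n (Rb s) (W s)))
      (Gform n eps P Q).
    intros a b c d e f g K1 K2 K3. split_eq K1. split_eq K2. split_eq K3. apply Ceq; cs; lra. }
  apply Ceq.
  - apply (const_deriv0 (fun s => fst (pairing V V1 W W1 s))).
    intro t. destruct (Hd t) as [A _]. rewrite Hz in A. exact A.
  - apply (const_deriv0 (fun s => snd (pairing V V1 W W1 s))).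
    intro t. destruct (Hd t) as [_ A]. rewrite Hz in A. exact A.
Qed.

End Conservation.

(** * Bounds on the index of b_z *)

(* If A + eps w = 0 and G(A, w) = 0 then A = 0, since then
   G(A, w) = - sum_i |A_i|^2. *)
Lemma Gform_orth_split n eps (A w : cvec) :
  (forall i, (i < n)%nat -> Cadd (A i) (Cmul (RtoC (eps i)) (w i)) = C0) ->
  Gform n eps A w = C0 -> forall i, (i < n)%nat -> A i = C0.
Proof.
  intros HAw HG.
  assert (HS : Csum n (fun i => Cmul (A i) (Cconj (A i))) = Csub C0 (Gform n eps A w)).
  { unfold Gform. rewrite <- (Csum_zero n (fun _ => C0)) at 1 by auto. rewrite <- Csum_sub.
    apply Csum_ext. intros i Hi. specialize (HAw i Hi). revert HAw.
    generalize (A i) (w i). intros a b E. split_eq E.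
    replace a with ((- (eps i * fst b)), - (eps i * snd b)) by (destruct a; apply Ceq; cs; lra).
    cring. }
  rewrite HG in HS. apply (f_equal fst) in HS. rewrite fst_Csum in HS. cs.
  replace (0 - 0) with 0 in HS by ring.
  intros i Hi. eapply Rsum_zero_nonneg in HS; [| |exact Hi].
  - cbv beta in HS. cs. apply Ceq; cs; nra.
  - intros j Hj. cbv beta. cs. nra.
Qed.

Section Index.
Variables (n : nat) (eps : nat -> R) (Gam dGam Rb : R -> rmat).
Hypothesis Heps : forall i, (i < n)%nat -> eps i = 1 \/ eps i = -1.
Hypothesis HdG : forall i j t, (i < n)%nat -> (j < n)%nat ->
  derivable_pt_lim (fun s => Gam s i j) t (dGam t i j).
Hypothesis Hskew : forall t i j, (i < n)%nat -> (j < n)%nat ->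
  eps i * Gam t i j + eps j * Gam t j i = 0.
Hypothesis Hsym : forall t i j, (i < n)%nat -> (j < n)%nat ->
  eps i * Rb t i j = eps j * Rb t j i.
Hypothesis HcontG : forall a b, (a < n)%nat -> (b < n)%nat ->
  forall t, continuity_pt (fun s => Gam s a b) t.
Hypothesis HcontM : forall a b, (a < n)%nat -> (b < n)%nat ->
  forall t, continuity_pt (fun s => Mco n Gam dGam Rb s a b) t.

Lemma negspace_init_inj z m Ws c : neg_space n eps Gam dGam Rb z m Ws ->
  (forall i, (i < n)%nat -> lincomb m c Ws 0 i = C0) -> forall j, (j < m)%nat -> c j = C0.
Proof.
  intros [_ Hneg] Hz j Hj. apply NNPP; intro Hc.
  destruct (Hneg c (ex_intro _ j (conj Hj Hc))) as [V1 [_ [Hlt _]]].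
  rewrite Gform_zero_r in Hlt by auto. simpl in Hlt. lra.
Qed.

Lemma index_le_dim z m : index_bz n eps Gam dGam Rb z m -> (m <= n)%nat.
Proof.
  intros [[Ws HW] _]. apply (indep_le n m (fun j i => Ws j 0 i)).
  intros c Hc. apply (negspace_init_inj z m Ws c HW). intros i Hi. apply Hc; auto.
Qed.

Definition J0_frame (n0 : nat) (Vs V1s V2s : nat -> R -> cvec) : Prop :=
  (forall j, (j < n0)%nat -> jac3 n Gam dGam Rb (Vs j) (V1s j) (V2s j) /\
     (forall i, Vs j 0 i = C0) /\ (forall i, Vs j 1 i = C0)) /\
  (forall c, (forall i, (i < n)%nat -> lincomb n0 c V1s 0 i = C0) -> forall j, (j < n0)%nat -> c j = C0).

(* A basis of the solutions vanishing at 0 and 1 is such a frame: by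
   uniqueness for (J), a combination with zero initial velocity vanishes. *)
Lemma J0_basis n0 : dim_is (J0 n Gam dGam Rb) n0 -> exists Vs V1s V2s, J0_frame n0 Vs V1s V2s.
Proof.
  intros [[Vs [HJ Hind]] _].
  assert (H : forall j, (j < n0)%nat -> exists p : (R -> cvec) * (R -> cvec),
    jac3 n Gam dGam Rb (Vs j) (fst p) (snd p)).
  { intros j Hj. destruct (HJ j Hj) as [J _]. apply jacobi_jac3 in J.
    destruct J as [V1 [V2 J]]. exists (V1, V2); auto. }
  destruct (fchoice (fun _ _ => C0, fun _ _ => C0) n0 _ H) as [f Hf].
  exists Vs, (fun j => fst (f j)), (fun j => snd (f j)). split.
  - intros j Hj. destruct (HJ j Hj) as [_ [A B]]. auto.
  - intros c Hc. apply Hind. intros t i.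
    assert (J := jac3_lincomb n Gam dGam Rb n0 c Vs (fun j => fst (f j)) (fun j => snd (f j)) Hf).
    destruct (lt_dec i n) as [Hi|Hi].
    + apply (jac3_zero n Gam dGam Rb HcontG HcontM _ _ _ J); auto. intros i' Hi'. split; auto.
      unfold lincomb. apply Csum_zero. intros j Hj. destruct (HJ j Hj) as [_ [A _]]. rewrite A. cring.
    + destruct J as [D _]. apply D; lia.
Qed.

Lemma n0_le_dim n0 : dim_is (J0 n Gam dGam Rb) n0 -> (n0 <= n)%nat.
Proof.
  intros Hd. destruct (J0_basis n0 Hd) as [Vs [V1s [V2s [_ H]]]].
  apply (indep_le n n0 (fun j i => V1s j 0 i)). intros c Hc. apply H. intros i Hi. apply Hc; auto.
Qed.

(* For U vanishing at 0 and 1 and W in J(z), conservation of the pairing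
   gives G(conj(z) U'(1) - U'(0), W(0)) = 0. *)
Lemma J0_orth_Jz z V V1 V2 W :
  jac3 n Gam dGam Rb V V1 V2 -> (forall i, V 0 i = C0) -> (forall i, V 1 i = C0) ->
  Jz n Gam dGam Rb z W ->
  Gform n eps (fun i => Csub (Cmul (Cconj z) (V1 1 i)) (V1 0 i)) (W 0) = C0.
Proof.
  intros JV H0 H1 [JW HWz]. apply jacobi_jac3 in JW. destruct JW as [W1 [W2 JW]].
  pose proof (pairing_const n eps Gam dGam Rb HdG Hskew Hsym V V1 V2 W W1 W2 JV JW) as E.
  unfold pairing in E.
  rewrite (Gform_zero_l n eps (V 1)), (Gform_zero_l n eps (V 0)) in E by auto.
  rewrite (Gform_ext n eps _ (V1 1) (W 1) (fun i => Cmul z (W 0 i))) in E.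
  2:{ intros j Hj; split; auto. rewrite matact_zero by auto. cring. }
  rewrite (Gform_ext n eps _ (V1 0) (W 0) (W 0)) in E.
  2:{ intros j Hj; split; auto. rewrite matact_zero by auto. cring. }
  rewrite Gform_scal_r in E. rewrite Gform_subl.
  revert E. generalize (Gform n eps (fun i => Cmul (Cconj z) (V1 1 i)) (W 0)) (Gform n eps (V1 0) (W 0)).
  intros a b E. split_eq E. apply Ceq; cs; lra.
Qed.

(* A solution U vanishing at 0 and 1 with U'(1) = z U'(0) != 0 yields the
   eigenvector (0, U'(0)) of the Poincare map. *)
Lemma J0_eigen z U U1 U2 i0 : jac3 n Gam dGam Rb U U1 U2 ->
  (forall i, U 0 i = C0) -> (forall i, U 1 i = C0) ->
  (forall i, (i < n)%nat -> U1 1 i = Cmul z (U1 0 i)) ->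
  (i0 < n)%nat -> U1 0 i0 <> C0 -> poincare_eig n Gam dGam Rb z.
Proof.
  intros JU HU0 HU1 Hz Hi0 Hne.
  set (v' := fun i => if Nat.ltb i n then U1 0 i else C0).
  assert (Hv' : forall i, (i < n)%nat -> v' i = U1 0 i).
  { intros i Hi. unfold v'. destruct (Nat.ltb_spec i n); [auto|lia]. }
  exists (fun _ => C0), v'. split; [intros i _; auto|]. split.
  { intros i Hi. unfold v'. destruct (Nat.ltb_spec i n); [lia|auto]. }
  split. { exists i0. split; auto. right. rewrite Hv'; auto. }
  exists (fun _ => C0), (fun i => Cadd (U1 1 i) (matact n (Gam 0) (U 1) i)). split.
  - pose proof JU as [_ [DU _]].
    exists U, U1. split; [apply jacobi_jac3; eauto|]. split; [auto|].
    intros i Hi. rewrite Hv' by auto. repeat split; auto.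
    rewrite matact_zero by auto. cring.
  - intros i Hi. split; [cring|].
    rewrite matact_zero, Hz, Hv' by auto. cring.
Qed.

Lemma J0_endpoint_indep z n0 Vs V1s V2s : Cnorm2 z = 1 -> ~ poincare_eig n Gam dGam Rb z ->
  J0_frame n0 Vs V1s V2s -> forall c, (forall i, (i < n)%nat ->
    Csum n0 (fun l => Cmul (c l) (Csub (Cmul (Cconj z) (V1s l 1 i)) (V1s l 0 i))) = C0) ->
  forall j, (j < n0)%nat -> c j = C0.
Proof.
  intros Hz Heig [HJ Hdet] c Hc. apply Hdet.
  set (U1 := lincomb n0 c V1s).
  assert (JU := jac3_lincomb n Gam dGam Rb n0 c Vs V1s V2s ltac:(intros j Hj; apply HJ; auto)).
  assert (HU : forall t, (t = 0 \/ t = 1) -> forall i, lincomb n0 c Vs t i = C0).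
  { intros t Ht i. unfold lincomb. apply Csum_zero. intros j Hj. destruct (HJ j Hj) as [_ [B C]].
    destruct Ht; subst; [rewrite B|rewrite C]; cring. }
  (* conj(z) U'(1) = U'(0), hence U'(1) = z U'(0) as |z| = 1 *)
  assert (HU1 : forall i, (i < n)%nat -> U1 1 i = Cmul z (U1 0 i)).
  { intros i Hi. specialize (Hc i Hi).
    replace (Csum n0 _) with (Csub (Cmul (Cconj z) (U1 1 i)) (U1 0 i)) in Hc
      by (unfold U1, lincomb; rewrite <- Csum_scal, <- Csum_sub; apply Csum_ext; intros; cring).
    pose proof (Cmul_conj_unit z Hz) as Zz. revert Hc Zz. generalize (U1 1 i) (U1 0 i).
    intros a b E Zz.
    assert (E' : Csub (Cmul (Cmul z (Cconj z)) a) (Cmul z b) = C0)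
      by (replace C0 with (Cmul z C0) by cring; rewrite <- E; cring).
    rewrite Zz in E'. split_eq E'. apply Ceq; cs; lra. }
  apply NNPP. intro Hex. apply not_all_ex_not in Hex. destruct Hex as [i0 Hi0].
  apply imply_to_and in Hi0. destruct Hi0 as [Hi0 Hne].
  apply Heig, (J0_eigen z (lincomb n0 c Vs) U1 (lincomb n0 c V2s) i0); auto.
Qed.

Lemma index_le_codim z m n0 : dim_is (J0 n Gam dGam Rb) n0 ->
  Cnorm2 z = 1 -> index_bz n eps Gam dGam Rb z m -> ~ poincare_eig n Gam dGam Rb z -> (n0 + m <= n)%nat.
Proof.
  intros Hd Hz Hidx Heig.
  destruct (J0_basis n0 Hd) as [Vs [V1s [V2s Hframe]]]. pose proof Hframe as [HJ _].
  destruct Hidx as [[Ws HW] _].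
  set (u := fun l i => Csub (Cmul (Cconj z) (V1s l 1 i)) (V1s l 0 i)).
  set (y := fun l i => if Nat.ltb l n0 then u l i else Cmul (RtoC (eps i)) (Ws (l - n0)%nat 0 i)).
  apply (indep_le n (n0 + m) y). intros c Hc.
  set (A := fun i => Csum n0 (fun l => Cmul (c l) (u l i))).
  set (w := fun i => Csum m (fun j => Cmul (c (n0 + j)%nat) (Ws j 0 i))).
  assert (HAw : forall i, (i < n)%nat -> Cadd (A i) (Cmul (RtoC (eps i)) (w i)) = C0).
  { intros i Hi. rewrite <- (Hc i Hi), Csum_split. f_equal.
    - apply Csum_ext; intros l Hl. unfold y. destruct (Nat.ltb_spec l n0); [auto|lia].
    - unfold w. rewrite <- Csum_scal. apply Csum_ext; intros j Hj. unfold y.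
      destruct (Nat.ltb_spec (n0 + j) n0); [lia|]. replace (n0 + j - n0)%nat with j by lia. cring. }
  assert (HG : Gform n eps A w = C0).
  { unfold A, w. rewrite Gform_lin_l. apply Csum_zero. intros l Hl.
    rewrite (Gform_lin_r n eps m (fun j => c (n0 + j)%nat) (u l) (fun j => Ws j 0)).
    rewrite Csum_zero; [cring|]. intros j Hj.
    destruct (HJ l Hl) as [J [A0 A1]]. destruct HW as [HWJ _].
    rewrite (J0_orth_Jz z (Vs l) (V1s l) (V2s l)); auto. cring. }
  pose proof (Gform_orth_split n eps A w HAw HG) as HA0.
  assert (Hc1 : forall l, (l < n0)%nat -> c l = C0)
    by exact (J0_endpoint_indep z n0 Vs V1s V2s Hz Heig Hframe c HA0).
  assert (Hw : forall i, (i < n)%nat -> lincomb m (fun j => c (n0 + j)%nat) Ws 0 i = C0).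
  { intros i Hi. specialize (HAw i Hi). rewrite HA0, Cadd_0l in HAw by auto.
    apply Cmul_eq0 in HAw. destruct HAw as [E|E]; [|exact E].
    exfalso. destruct (Heps i Hi) as [X|X]; rewrite X in E; unfold RtoC, C0 in E; inversion E; lra. }
  pose proof (negspace_init_inj z m Ws _ HW Hw) as Hc2.
  intros l Hl. destruct (lt_dec l n0); auto. replace l with (n0 + (l - n0))%nat by lia. apply Hc2. lia.
Qed.

End Index.

Lemma Cpow_omega N k : Cpow (omega N) k = Cexpi (INR k * (2 * PI / INR N)).
Proof.
  induction k.
  - simpl. unfold Cexpi. rewrite Rmult_0_l, cos_0, sin_0. auto.
  - change (Cpow (omega N) (S k)) with (Cmul (omega N) (Cpow (omega N) k)).
    rewrite IHk. unfold omega, Cexpi, Cmul; cbn [fst snd].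
    rewrite S_INR. replace ((INR k + 1) * (2 * PI / INR N))
      with (2 * PI / INR N + INR k * (2 * PI / INR N)) by ring.
    rewrite cos_plus, sin_plus. f_equal; ring.
Qed.

Lemma Cnorm2_omega N k : Cnorm2 (Cpow (omega N) k) = 1.
Proof.
  rewrite Cpow_omega. unfold Cnorm2, Cexpi; simpl.
  pose proof (sin2_cos2 (INR k * (2 * PI / INR N))). unfold Rsqr in H. lra.
Qed.

Lemma omega_inj N k k' : (1 <= N)%nat -> (k < N)%nat -> (k' < N)%nat ->
  Cpow (omega N) k = Cpow (omega N) k' -> k = k'.
Proof.
  intros HN Hk Hk'.
  assert (Hne : forall a b, (a < b)%nat -> (b < N)%nat -> Cpow (omega N) a <> Cpow (omega N) b).
  { intros a b Hab Hb E. rewrite !Cpow_omega in E. unfold Cexpi in E. inversion E as [[Ec Es]].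
    set (x := INR a * (2 * PI / INR N)) in *. set (y := INR b * (2 * PI / INR N)) in *.
    assert (HN' : 0 < INR N) by (apply lt_0_INR; lia).
    assert (Hstep : 0 < 2 * PI / INR N)
      by (unfold Rdiv; apply Rmult_lt_0_compat; [pose proof PI_RGT_0; lra|apply Rinv_0_lt_compat; lra]).
    assert (Hd : y - x = INR (b - a) * (2 * PI / INR N)) by (unfold x, y; rewrite minus_INR by lia; ring).
    assert (Hpos : 0 < y - x) by (rewrite Hd; apply Rmult_lt_0_compat; auto; apply lt_0_INR; lia).
    assert (Hlt : y - x < 2 * PI).
    { rewrite Hd. assert (INR (b - a) < INR N) by (apply lt_INR; lia).
      replace (2 * PI) with (INR N * (2 * PI / INR N)) at 2 by (field; lra).
      apply Rmult_lt_compat_r; auto. }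
    assert (Hs : sin (y - x) = 0) by (rewrite sin_minus, Ec, Es; ring).
    assert (Hc : cos (y - x) = 1).
    { rewrite cos_minus, Ec, Es. pose proof (sin2_cos2 y). unfold Rsqr in H; lra. }
    destruct (sin_eq_O_2PI_0 (y - x) ltac:(lra) ltac:(lra) Hs) as [A|[A|A]]; try lra.
    rewrite A, cos_PI in Hc. lra. }
  intro E. destruct (lt_eq_lt_dec k k') as [[L|L]|L]; auto; exfalso; eapply Hne; eauto.
Qed.

(** * The Poincare map as a linear relation on C^(2n) *)

Section Poincare.
Variables (n : nat) (Gam dGam Rb : R -> rmat).
Hypothesis HcontG : forall a b, (a < n)%nat -> (b < n)%nat ->
  forall t, continuity_pt (fun s => Gam s a b) t.
Hypothesis HcontM : forall a b, (a < n)%nat -> (b < n)%nat ->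
  forall t, continuity_pt (fun s => Mco n Gam dGam Rb s a b) t.

(* Y = P X, with (v, v') encoded as the single vector X = (v_0..v_{n-1}, v'_0..v'_{n-1}). *)
Definition poincare_rel (X Y : cvec) : Prop :=
  exists V V1 V2, jac3 n Gam dGam Rb V V1 V2 /\ forall i, (i<n)%nat ->
    V 0 i = X i /\ V1 0 i = Csub (X (n+i)%nat) (matact n (Gam 0) X i) /\
    Y i = V 1 i /\ Y (n+i)%nat = Cadd (V1 1 i) (matact n (Gam 0) (V 1) i).

Lemma poincare_rel_lin k c xs ys : (forall l, (l<k)%nat -> poincare_rel (xs l) (ys l)) ->
  poincare_rel (fun i => Csum k (fun l => Cmul (c l) (xs l i)))
               (fun i => Csum k (fun l => Cmul (c l) (ys l i))).
Proof.
  intros H.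
  assert (H' : forall l, (l<k)%nat -> exists p : ((R -> cvec) * (R -> cvec)) * (R -> cvec),
    jac3 n Gam dGam Rb (fst (fst p)) (snd (fst p)) (snd p) /\ forall i, (i<n)%nat ->
    fst (fst p) 0 i = xs l i /\ snd (fst p) 0 i = Csub (xs l (n+i)%nat) (matact n (Gam 0) (xs l) i) /\
    ys l i = fst (fst p) 1 i /\ ys l (n+i)%nat = Cadd (snd (fst p) 1 i) (matact n (Gam 0) (fst (fst p) 1) i)).
  { intros l Hl. destruct (H l Hl) as [a [b [d Hp]]]. exists ((a, b), d). exact Hp. }
  destruct (fchoice ((fun _ _ => C0, fun _ _ => C0), fun _ _ => C0) k _ H') as [f Hf].
  set (Vs := fun l => fst (fst (f l))). set (V1s := fun l => snd (fst (f l))).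
  set (V2s := fun l => snd (f l)).
  assert (HJ : forall l, (l<k)%nat -> jac3 n Gam dGam Rb (Vs l) (V1s l) (V2s l) /\ forall i, (i<n)%nat ->
    Vs l 0 i = xs l i /\ V1s l 0 i = Csub (xs l (n+i)%nat) (matact n (Gam 0) (xs l) i) /\
    ys l i = Vs l 1 i /\ ys l (n+i)%nat = Cadd (V1s l 1 i) (matact n (Gam 0) (Vs l 1) i))
    by exact Hf.
  exists (lincomb k c Vs), (lincomb k c V1s), (lincomb k c V2s). split.
  - apply jac3_lincomb. intros; apply HJ; auto.
  - intros i Hi. unfold lincomb. repeat split.
    + apply Csum_ext; intros l Hl. destruct (HJ l Hl) as [_ E]. rewrite (proj1 (E i Hi)); auto.
    + rewrite matact_lin, <- Csum_sub. apply Csum_ext; intros l Hl. destruct (HJ l Hl) as [_ E].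
      rewrite (proj1 (proj2 (E i Hi))). cring.
    + apply Csum_ext; intros l Hl. destruct (HJ l Hl) as [_ E].
      rewrite (proj1 (proj2 (proj2 (E i Hi)))); auto.
    + rewrite (matact_lin n (Gam 0) k c (fun l => Vs l 1)), <- Csum_add. apply Csum_ext; intros l Hl.
      destruct (HJ l Hl) as [_ E]. rewrite (proj2 (proj2 (proj2 (E i Hi)))). cring.
Qed.

(* By uniqueness for (J), the Poincare map sends 0 to 0. *)
Lemma poincare_rel_0 x y : poincare_rel x y ->
  (forall i, (i < 2 * n)%nat -> x i = C0) -> forall i, (i < 2 * n)%nat -> y i = C0.
Proof.
  intros [V [V1 [V2 [J E]]]] Hx.
  assert (Hz : forall t i, (i < n)%nat -> V t i = C0 /\ V1 t i = C0).
  { apply (jac3_zero n Gam dGam Rb HcontG HcontM V V1 V2 J). intros i Hi. destruct (E i Hi) as [A [B _]].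
    rewrite A, B, Hx, Hx by lia. rewrite matact_zero by (intros; apply Hx; lia). split; auto; cring. }
  intros i Hi. destruct (lt_dec i n).
  - destruct (E i l) as [_ [_ [A _]]]. rewrite A. apply Hz; auto.
  - replace i with (n + (i - n))%nat by lia. destruct (E (i - n)%nat ltac:(lia)) as [_ [_ [_ A]]].
    rewrite A, (proj2 (Hz 1 (i - n)%nat ltac:(lia))), matact_zero by (intros; apply Hz; auto). cring.
Qed.

Lemma poincare_eig_rel z : poincare_eig n Gam dGam Rb z ->
  exists X, poincare_rel X (fun i => Cmul z (X i)) /\ exists i, (i < 2 * n)%nat /\ X i <> C0.
Proof.
  intros [v [v' [Hv [Hv' [[i0 [Hi0 Hnz]] [w [w' [[V [V1 [JV [DV E]]]] Hw]]]]]]]].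
  apply jacobi_jac3 in JV. destruct JV as [V1' [V2 J]].
  assert (HV1 : forall t i, (i < n)%nat -> V1 t i = V1' t i).
  { intros t i Hi. destruct J as [_ [D _]]. rewrite cderiv_cd in DV, D.
    apply (cd_unique (fun s => V s i) (fun s => V1 s i) (fun s => V1' s i)); auto. }
  set (X := fun i => if Nat.ltb i n then v i else v' (i - n)%nat).
  assert (HXl : forall i, (i < n)%nat -> X i = v i).
  { intros i Hi; unfold X; destruct (Nat.ltb_spec i n); [auto|lia]. }
  assert (HXr : forall i, X (n + i)%nat = v' i).
  { intros i; unfold X; destruct (Nat.ltb_spec (n+i) n); [lia|]. f_equal; lia. }
  exists X. split.
  - exists V, V1', V2. split; auto. intros i Hi. destruct (E i Hi) as [A [B [C D]]].
    destruct (Hw i Hi) as [W1 W2]. rewrite HXl, HXr by auto. repeat split.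
    + auto.
    + rewrite <- HV1 by auto. rewrite B. f_equal. apply matact_ext. intros; rewrite HXl; auto.
    + rewrite <- W1, C. auto.
    + rewrite <- W2, D, HV1 by auto. auto.
  - destruct Hnz as [Hnz|Hnz].
    + exists i0. split; [lia|]. rewrite HXl; auto.
    + exists (n + i0)%nat. split; [lia|]. rewrite HXr; auto.
Qed.

Definition is_eig (N k : nat) : nat :=
  if excluded_middle_informative (poincare_eig n Gam dGam Rb (Cpow (omega N) k)) then 1%nat else 0%nat.

Lemma enum_eig N K : exists g : nat -> nat,
  (forall l, (l < Nsum K (is_eig N))%nat -> (g l < K)%nat /\ poincare_eig n Gam dGam Rb (Cpow (omega N) (g l))) /\
  (forall l l', (l < Nsum K (is_eig N))%nat -> (l' < Nsum K (is_eig N))%nat -> g l = g l' -> l = l').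
Proof.
  induction K.
  - exists (fun l => l). simpl. split; intros; lia.
  - destruct IHK as [g [G1 G2]]. simpl Nsum.
    set (c := Nsum K (is_eig N)) in *.
    destruct (classic (poincare_eig n Gam dGam Rb (Cpow (omega N) K))) as [He|He].
    + replace (is_eig N K) with 1%nat by (unfold is_eig; destruct excluded_middle_informative; tauto).
      exists (fun l => if Nat.eqb l c then K else g l). split.
      * intros l Hl. destruct (Nat.eqb_spec l c). split; [lia|auto].
        destruct (G1 l ltac:(lia)). split; [lia|auto].
      * intros l l' Hl Hl' E. destruct (Nat.eqb_spec l c), (Nat.eqb_spec l' c); try lia.
        -- destruct (G1 l' ltac:(lia)); lia.
        -- destruct (G1 l ltac:(lia)); lia.
        -- apply G2; auto; lia.
    + replace (is_eig N K) with 0%nat by (unfold is_eig; destruct excluded_middle_informative; tauto).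
      exists g. rewrite Nat.add_0_r. split; auto. intros l Hl. destruct (G1 l Hl); split; [lia|auto].
Qed.

Lemma eig_count_le N : (1 <= N)%nat -> (Nsum N (is_eig N) <= 2 * n)%nat.
Proof.
  intros HN. destruct (enum_eig N N) as [g [G1 G2]].
  set (cnt := Nsum N (is_eig N)) in *.
  assert (H : forall l, (l < cnt)%nat -> exists X,
      poincare_rel X (fun i => Cmul (Cpow (omega N) (g l)) (X i)) /\
      exists i, (i < 2 * n)%nat /\ X i <> C0).
  { intros l Hl. apply poincare_eig_rel. apply G1; auto. }
  destruct (fchoice (fun _ => C0) cnt _ H) as [xs Hxs].
  apply (indep_le (2 * n) cnt xs).
  apply (eigvec_indep (2 * n) poincare_rel poincare_rel_lin poincare_rel_0 cnt xs
     (fun l => Cpow (omega N) (g l))).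
  - intros l Hl; apply Hxs; auto.
  - intros l Hl; apply Hxs; auto.
  - intros l l' Hl Hl' E. apply G2; auto. apply (omega_inj N); auto; apply G1; auto.
Qed.

End Poincare.

Lemma Mco_continuous n Gam dGam Rb :
  (forall i j, (i < n)%nat -> (j < n)%nat -> Cinf (fun t => Gam t i j)) ->
  (forall i j t, (i < n)%nat -> (j < n)%nat -> derivable_pt_lim (fun s => Gam s i j) t (dGam t i j)) ->
  (forall i j, (i < n)%nat -> (j < n)%nat -> Cinf (fun t => Rb t i j)) ->
  forall a b, (a < n)%nat -> (b < n)%nat -> forall t, continuity_pt (fun s => Mco n Gam dGam Rb s a b) t.
Proof.
  intros HG HdG HR a b Ha Hb t. unfold Mco.
  apply (continuity_pt_minus (fun s => dGam s a b + matmul n (Gam s) (Gam s) a b)).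
  apply (continuity_pt_plus (fun s => dGam s a b)).
  - apply (cinf_deriv_cont (fun s => Gam s a b)); auto.
  - unfold matmul. apply (C_Rsum n (fun k s => Gam s a k * Gam s k b)). intros k Hk.
    apply (continuity_pt_mult (fun s => Gam s a k)); apply cinf_cont; auto.
  - apply cinf_cont; auto.
Qed.

Theorem lemma6p3
  (n : nat) (eps : nat -> R) (Gam dGam Rb : R -> rmat) (e : R -> nat -> R)
  (Heps : forall i, (i < n)%nat -> eps i = 1 \/ eps i = -1)
  (* Gamma_t: smooth, 1-periodic, G-skew (metric connection, orthonormal frame) *)
  (HGsm : forall i j, (i < n)%nat -> (j < n)%nat -> Cinf (fun t => Gam t i j))
  (HdG : forall i j t, (i < n)%nat -> (j < n)%nat ->
           derivable_pt_lim (fun s => Gam s i j) t (dGam t i j))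
  (HGper : forall t i j, Gam (t + 1) i j = Gam t i j)
  (HGskew : forall t i j, (i < n)%nat -> (j < n)%nat ->
              eps i * Gam t i j + eps j * Gam t j i = 0)
  (* Rbar_t: smooth, 1-periodic, G-self-adjoint (curvature pair symmetry) *)
  (HRsm : forall i j, (i < n)%nat -> (j < n)%nat -> Cinf (fun t => Rb t i j))
  (HRper : forall t i j, Rb (t + 1) i j = Rb t i j)
  (HRsym : forall t i j, (i < n)%nat -> (j < n)%nat ->
             eps i * Rb t i j = eps j * Rb t j i)
  (* e(t) = T_t^{-1} gamma'(t): smooth, 1-periodic, parallel, Rbar_t e(t) = 0 *)
  (Hesm : forall i, (i < n)%nat -> Cinf (fun t => e t i))
  (Heper : forall t i, e (t + 1) i = e t i)
  (Hepar : forall t i, (i < n)%nat ->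
             derivable_pt_lim (fun s => e s i) t (- Rsum n (fun j => Gam t i j * e t j)))
  (HRe : forall t i, (i < n)%nat -> Rsum n (fun j => Rb t i j * e t j) = 0)
  (n0 : nat) (Hn0 : dim_is (J0 n Gam dGam Rb) n0) :
  (forall (z : Cx) (m : nat), Cnorm2 z = 1 -> index_bz n eps Gam dGam Rb z m ->
     (Z.of_nat m <= 2 * Z.of_nat n - Z.of_nat n0)%Z /\
     (~ poincare_eig n Gam dGam Rb z -> (Z.of_nat m <= Z.of_nat n - Z.of_nat n0)%Z)) /\
  (forall (N : nat) (nm : nat -> nat), (1 <= N)%nat ->
     (forall k, (k < N)%nat -> index_bz n eps Gam dGam Rb (Cpow (omega N) k) (nm k)) ->
     (0 <= Z.of_nat (Nsum N nm))%Z /\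
     (Z.of_nat (Nsum N nm) <=
        Z.of_nat N * (Z.of_nat n - Z.of_nat n0) + 4 * Z.of_nat n ^ 2
        - 2 * Z.of_nat n0 * Z.of_nat n)%Z).
Proof.
  pose proof (fun a b Ha Hb => cinf_cont _ (HGsm a b Ha Hb)) as HcontG.
  pose proof (Mco_continuous n Gam dGam Rb HGsm HdG HRsm) as HcontM.
  pose proof (n0_le_dim n Gam dGam Rb HcontG HcontM n0 Hn0) as Hn0n.
  pose proof (fun z m => index_le_dim n eps Gam dGam Rb z m) as Hle.
  pose proof (fun z m => index_le_codim n eps Gam dGam Rb Heps HdG HGskew HRsym HcontG HcontM z m n0 Hn0)
    as Hcodim.
  split.
  - intros z m Hz Hidx. pose proof (Hle z m Hidx). split; [lia|].
    intro Hne. pose proof (Hcodim z m Hz Hidx Hne). lia.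
  - intros N nm HN Hk. split; [lia|].
    (* each term is at most n - n_0, plus n_0 when omega^k is an eigenvalue *)
    assert (Hb : forall k, (k < N)%nat -> (nm k <= (n - n0) + n0 * is_eig n Gam dGam Rb N k)%nat).
    { intros k Hkn. pose proof (Hle _ _ (Hk k Hkn)).
      unfold is_eig. destruct excluded_middle_informative as [E|E]; [lia|].
      pose proof (Hcodim _ _ (Cnorm2_omega N k) (Hk k Hkn) E). lia. }
    apply Nsum_le in Hb. rewrite Nsum_lin in Hb.
    pose proof (eig_count_le n Gam dGam Rb HcontG HcontM N HN) as Hc.
    set (C := Nsum N (is_eig n Gam dGam Rb N)) in *. set (S := Nsum N nm) in *.
    assert (n0 * C <= n0 * (2 * n))%nat by (apply Nat.mul_le_mono_l; auto).
    assert (n0 * n <= n * n)%nat by (apply Nat.mul_le_mono_r; auto).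
    nia.
Qed.
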